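(* The correspondence S ↦ H_S S extends to an Elgot monad (on sets) as follows: η(x ∈ S) = η^S(x); for f : X → H_S S, f^{*} = f^{*}_S · τ · H_{ι'·f} id : H_X X → H_{S⊎{⊥}} X → H_S X → H_S S; for f : X → H_{S⊎X}(S⊎X), f^{†} = τ · H_{[inl, (ι'·f)^{♮}]} id · f^{†}_{S⊎X} : X → H_{S⊎X} S → H_{S⊎{⊥}} S → H_S S, where ι' = [inl, id] · ι : H_S S → S⊎{⊥} and (−)^{♮} is the iteration operator of the maybe monad (−)⊎{⊥}. Moreover, the monad thus defined is isomorphic to the hybrid monad H.
   Context: Trajectories over a set S are pairs ⟨I,e⟩ with I = [0,d] (d finite non-negative real) or I = [0,d) (d non-negative real or ∞) and e : I → S. Trj_S is the monoid of trajectories with domain [0,d), d finite, under concatenation ⟨[0,d1),e1⟩⌢⟨[0,d2),e2⟩ = ⟨[0,d1+d2), λt. if t<d1 then e1^t else e2^{t−d1}⟩, unit ε = ⟨∅,!⟩. H_S X = (Trj_S × X) ∪ (all trajectories over S); elements are triples ⟨I,e,x⟩ and pairs ⟨I,e⟩. H_S is a monad with η^S(x) = ⟨ε,x⟩ and f^{*}_S(m,x) = (m⌢n,y) if f(x)=⟨n,y⟩, f^{*}_S(m,x) = m⌢e if f(x)=e is a trajectory, f^{*}_S(e) = e. It is an Elgot monad whose iteration f^{†}_S is the least fixpoint of g ↦ [η^S, g]^{*}_S · f (w.r.t. the prefix order on trajectories). H_S is functorial in S: for g : S → S', H_g id : H_S X → H_{S'} X applies g pointwise to trajectory values and is identity on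 the X-component. ι : H_S X → X ⊎ (S ⊎ {⊥}) is ι(I,e,x) = inr inl e^0 if I ≠ ∅, inl x otherwise; ι(I,e) = inr inl e^0 if I ≠ ∅, inr inr ⊥ otherwise. τ : H_{S⊎Y} X → H_S X is τ(I,e,x) = ⟨I,e',x⟩ if I = I', else ⟨I',e'⟩; τ(I,e) = ⟨I',e'⟩, where ⟨I',e'⟩ is the largest trajectory with e^t = inl e'^t for all t ∈ I'. Maybe-monad iteration: for f : X → (Y⊎X)⊎{⊥} and x0 ∈ X, take the longest sequence x0,x1,... with f(x_i) = inl inr x_{i+1}; f^{♮}(x0) = inr ⊥ if the sequence is infinite or some f(x_i) = inr ⊥, and f^{♮}(x0) = inl y if for the last element x_n, f(x_n) = inl inl y. The hybrid monad H: HX = Σ_{I=[0,d], d finite} X^I ⊎ Σ_{I=[0,d] or [0,d)} X^I (convergent trajectories in the left summand, divergent in the right); for p = inj⟨I,e⟩ write p_dr = I, p_ev = e; η(x) = inl⟨[0,0], λt.x⟩; for f : X → HY, with I' = ⋃{[0,t] ⊆ I | ∀s∈[0,t]. f(e^s) ≠ inr ε}: f^{*}(inl⟨I,e⟩) = inj⟨I+J, λt. if t<d then (f(e^t))_ev^0 else (f(e^d))_ev^{t−d}⟩ if I' = I = [0,d] and f(e^d) = inj⟨J,e'⟩; f^{*}(inl⟨I,e⟩) = inr⟨I', λt.(f(e^t))_ev^0⟩ if I' ≠ I; f^{*}(inr⟨I,e⟩) = inr⟨I', λt.(f(e^t))_ev^0⟩ (inj ∈ {inl, inr}, + is Minkowski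 addition of intervals). *)

From Stdlib Require Import Reals Lra ClassicalEpsilon.
Open Scope R_scope.
Set Implicit Arguments.

Definition decP (P : Prop) : bool :=
  if excluded_middle_informative P then true else false.

Inductive dur : Type := DClosed (d : R) | DOpen (d : R) | DInf.

Definition dur_ok (D : dur) : Prop :=
  match D with DClosed d | DOpen d => 0 <= d | DInf => True end.

Definition in_dom (D : dur) (t : R) : Prop :=
  match D with
  | DClosed d => 0 <= t <= d
  | DOpen d => 0 <= t < d
  | DInf => 0 <= t
  end.

(* A trajectory <I,e> over S: the map e is encoded as an option-valued
   function on R which is defined (Some) exactly on I.  Hence Leibniz
   equality of trajectories is equality of <I,e>. *)
Record traj (S : Type) : Type := Traj {
  tdur : dur;
  tev : R -> option S;
  tdur_ok : dur_ok tdur;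
  tev_dom : forall t, tev t <> None <-> in_dom tdur t }.
Arguments tdur {S}. Arguments tev {S}.

Lemma traj_empty_ok : dur_ok (DOpen 0).
Proof. simpl; lra. Qed.
Lemma traj_empty_dom (S : Type) :
  forall t, (fun _ : R => @None S) t <> None <-> in_dom (DOpen 0) t.
Proof. intro t; simpl; split; [intro H; now elim H | lra]. Qed.

Definition traj_empty (S : Type) : traj S :=
  Traj (DOpen 0) (fun _ => None) traj_empty_ok (@traj_empty_dom S).

(* Build a trajectory from its option-valued graph; the domain shape is
   recovered classically.  (All uses below feed genuine trajectories, so
   the fallback branch is never taken.) *)
Definition mk_traj (S : Type) (f : R -> option S) : traj S :=
  match excluded_middle_informative
          (exists D, dur_ok D /\ forall t, f t <> None <-> in_dom D t) with
  | left H =>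
      let (D, HD) := constructive_indefinite_description _ H in
      Traj D f (proj1 HD) (proj2 HD)
  | right _ => traj_empty S
  end.

Definition Trj (S : Type) : Type := { e : traj S | exists d, tdur e = DOpen d }.

Definition trj_len (S : Type) (m : Trj S) : R :=
  match tdur (proj1_sig m) with DOpen d | DClosed d => d | DInf => 0 end.

Lemma trj_empty_pf (S : Type) : exists d, tdur (traj_empty S) = DOpen d.
Proof. now exists 0. Qed.
Definition trj_eps (S : Type) : Trj S := exist _ (traj_empty S) (@trj_empty_pf S).

Definition mk_trj (S : Type) (e : traj S) : Trj S :=
  match excluded_middle_informative (exists d, tdur e = DOpen d) with
  | left H => exist _ e H
  | right _ => trj_eps S
  end.

Definition tconcat (S : Type) (m : Trj S) (e : traj S) : traj S :=
  mk_traj (fun t => if Rlt_dec t (trj_len m) then tev (proj1_sig m) t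
                    else tev e (t - trj_len m)).

Definition trj_cat (S : Type) (m n : Trj S) : Trj S :=
  mk_trj (tconcat m (proj1_sig n)).

Definition tprefix (S : Type) (e e' : traj S) : Prop :=
  forall t, tev e t <> None -> tev e' t = tev e t.

Definition H (S X : Type) : Type := ((Trj S * X) + traj S)%type.

Definition etaH (S X : Type) (x : X) : H S X := inl (trj_eps S, x).

Definition bindH (S X Y : Type) (f : X -> H S Y) (p : H S X) : H S Y :=
  match p with
  | inl (m, x) =>
      match f x with
      | inl (n, y) => inl (trj_cat m n, y)
      | inr e => inr (tconcat m e)
      end
  | inr e => inr e
  end.

Definition H_traj (S X : Type) (p : H S X) : traj S :=
  match p with inl (m, _) => proj1_sig m | inr e => e end.

Definition Hle (S X : Type) (p q : H S X) : Prop :=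
  p = q \/ exists e, p = inr e /\ tprefix e (H_traj q).

Definition copair (A B C : Type) (f : A -> C) (g : B -> C) (z : A + B) : C :=
  match z with inl a => f a | inr b => g b end.

Definition iterH_step (S X Y : Type) (f : X -> H S (Y + X)) (g : X -> H S Y)
  : X -> H S Y :=
  fun x => bindH (copair (@etaH S Y) g) (f x).

Definition iterH (S X Y : Type) (f : X -> H S (Y + X)) : X -> H S Y :=
  epsilon (inhabits (fun _ : X => @inr (Trj S * Y) (traj S) (traj_empty S)))
    (fun g => (forall x, g x = iterH_step f g x) /\
              (forall g', (forall x, g' x = iterH_step f g' x) ->
                          forall x, Hle (g x) (g' x))).

Definition tmap (S S' : Type) (g : S -> S') (e : traj S) : traj S' :=
  mk_traj (fun t => option_map g (tev e t)).

Definition mapH (S S' X : Type) (g : S -> S') (p : H S X) : H S' X :=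
  match p with
  | inl (m, x) => inl (mk_trj (tmap g (proj1_sig m)), x)
  | inr e => inr (tmap g e)
  end.

(* ι : H_S X → X ⊎ (S ⊎ {⊥}),   {⊥} := unit *)
Definition iotaH (S X : Type) (p : H S X) : X + (S + unit) :=
  match p with
  | inl (m, x) =>
      match tev (proj1_sig m) 0 with Some s => inr (inl s) | None => inl x end
  | inr e =>
      match tev e 0 with Some s => inr (inl s) | None => inr (inr tt) end
  end.

Definition iota' (S : Type) (p : H S S) : S + unit :=
  copair (@inl S unit) (fun z => z) (iotaH p).

Definition lprefix (S Y : Type) (e : traj (S + Y)) : traj S :=
  mk_traj (fun t =>
    if decP (forall s, 0 <= s <= t -> exists a, tev e s = Some (inl a))
    then match tev e t with Some (inl a) => Some a | _ => None end
    else None).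

Definition tau (S Y X : Type) (p : H (S + Y) X) : H S X :=
  match p with
  | inl (m, x) =>
      if decP (forall t, tev (lprefix (proj1_sig m)) t <> None <->
                         tev (proj1_sig m) t <> None)
      then inl (mk_trj (lprefix (proj1_sig m)), x)
      else inr (lprefix (proj1_sig m))
  | inr e => inr (lprefix e)
  end.

Definition maybe_step (X Y : Type) (f : X -> (Y + X) + unit)
  (z : (Y + X) + unit) : (Y + X) + unit :=
  match z with inl (inr x) => f x | _ => z end.

Definition maybe_iter (X Y : Type) (f : X -> (Y + X) + unit) (x0 : X) : Y + unit :=
  match excluded_middle_informative
          (exists y, exists n, Nat.iter n (maybe_step f) (inl (inr x0)) = inl (inl y)) with
  | left H => inl (proj1_sig (constructive_indefinite_description _ H))
  | right _ => inr tt
  end.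

Definition Tm (S : Type) : Type := H S S.

Definition etaT (S : Type) (x : S) : Tm S := etaH S x.

Definition bindT (X S : Type) (f : X -> Tm S) (p : Tm X) : Tm S :=
  bindH f (tau (mapH (fun x => iota' (f x)) p : H (S + unit) X)).

Definition iterT (X S : Type) (f : X -> Tm (S + X)%type) : X -> Tm S :=
  fun x => tau (mapH (copair (@inl S unit) (maybe_iter (fun x' => iota' (f x'))))
                     (iterH f x) : H (S + unit) S).

Section ElgotDef.
Local Open Scope type_scope.
Definition is_elgot_monad (T : Type -> Type)
  (ret : forall X, X -> T X)
  (bind : forall X Y, (X -> T Y) -> T X -> T Y)
  (iter : forall X Y, (X -> T (Y + X)) -> X -> T Y) : Prop :=
  let fmap := fun X Y (h : X -> Y) (p : T X) => bind X Y (fun x => ret Y (h x)) p in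
  (forall X (p : T X), bind X X (ret X) p = p) /\
  (forall X Y (f : X -> T Y) (x : X), bind X Y f (ret X x) = f x) /\
  (forall X Y Z (f : X -> T Y) (g : Y -> T Z) (p : T X),
      bind Y Z g (bind X Y f p) = bind X Z (fun x => bind Y Z g (f x)) p) /\
  (forall X Y (f : X -> T (Y + X)) (x : X),
      iter X Y f x = bind (Y + X)%type Y (copair (ret Y) (iter X Y f)) (f x)) /\
  (forall X Y Z (f : X -> T (Y + X)) (g : Y -> T Z) (x : X),
      bind Y Z g (iter X Y f x) =
      iter X Z (fun x' => bind (Y + X)%type (Z + X)%type
                   (copair (fun y => fmap Z (Z + X)%type inl (g y))
                           (fun x'' => ret (Z + X)%type (inr x''))) (f x')) x) /\
  (forall X Y (f : X -> T ((Y + X) + X)) (x : X),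
      iter X Y (fun x' => fmap ((Y + X) + X)%type (Y + X)%type
                   (copair (fun z => z) (@inr Y X)) (f x')) x =
      iter X Y (iter X (Y + X)%type f) x) /\
  (forall X Y Z (f : X -> T (Y + X)) (g : Z -> T (Y + Z)) (h : Z -> X),
      (forall z, f (h z) = fmap (Y + Z)%type (Y + X)%type
                   (copair (@inl Y X) (fun z' => inr (h z'))) (g z)) ->
      forall z, iter X Y f (h z) = iter Z Y g z).
End ElgotDef.

Definition ctraj (X : Type) : Type := { e : traj X | exists d, tdur e = DClosed d }.

Definition ctraj_fallback (X : Type) (e : traj X) : option (ctraj X) :=
  match excluded_middle_informative (exists d, tdur e = DClosed d) with
  | left H => Some (exist _ e H)
  | right _ => None
  end.

(* HX = convergent (closed finite) ⊎ divergent (any) trajectories *)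
Definition HH (X : Type) : Type := (ctraj X + traj X)%type.

Definition mk_conv (X : Type) (e : traj X) : HH X :=
  match ctraj_fallback e with Some c => inl c | None => inr e end.

Definition HH_traj (X : Type) (p : HH X) : traj X :=
  match p with inl c => proj1_sig c | inr e => e end.

Definition hret (X : Type) (x : X) : HH X :=
  mk_conv (mk_traj (fun t => if Req_EM_T t 0 then Some x else None)).

Definition hbind (X Y : Type) (f : X -> HH Y) (p : HH X) : HH Y :=
  let e := HH_traj p in
  let I' := fun t => 0 <= t /\ forall s, 0 <= s <= t ->
              exists x, tev e s = Some x /\ f x <> inr (traj_empty Y) in
  let head := fun t => if decP (I' t)
              then match tev e t with Some x => tev (HH_traj (f x)) 0 | None => None end
              else None in
  let div := inr (mk_traj head) in
  match p with
  | inl c =>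
      match tdur (proj1_sig c) with
      | DClosed d =>
          if decP (forall t, I' t <-> in_dom (DClosed d) t) then
            match tev (proj1_sig c) d with
            | Some xd =>
                let g := fun t =>
                  if Rlt_dec t d
                  then match tev e t with Some x => tev (HH_traj (f x)) 0 | None => None end
                  else tev (HH_traj (f xd)) (t - d) in
                match f xd with
                | inl _ => mk_conv (mk_traj g)
                | inr _ => inr (mk_traj g)
                end
            | None => div
            end
          else div
      | _ => div
      end
  | inr _ => div
  end.

(* Every element of [H S X] is determined by its graph [t ↦ e^t], a partial function
   defined on an initial segment of [0,∞), together with its end point (duration, value)
   when it has a value.  Concatenation, [H_g id], [τ] and suprema of chains all act
   transparently on this description, so each equation reduces to an equality of graphs.
   The central one is that [τ · H_M id], for a partial map [M : A -> S ⊎ {⊥}], commutes with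
   Kleisli extension; it yields the monad laws of [S ↦ H_S S].

   A chain in the prefix order either becomes stationary at an element with a value or
   consists of trajectories whose union is its supremum, so [f^†_S] is the supremum of its
   Kleene approximants.  Fixpoint induction then gives the Elgot laws once one knows that
   [ι'] of the iterate is the maybe-monad iterate [(ι'·f)^♮], which is exactly the
   information [τ] uses to cut [f^†_{S⊎X}].

   The isomorphism with the hybrid monad closes a trajectory on [0,d) with value [x] into
   the convergent trajectory on [0,d] ending in [x]. *)

From Stdlib Require Import Reals Lra Classical ClassicalEpsilon.
From Stdlib Require Import FunctionalExtensionality ProofIrrelevance.
Open Scope R_scope.
Set Implicit Arguments.

(** * Trajectories as graphs *)

Definition segment {A} (g : R -> option A) : Prop :=
  (forall t, g t <> None -> 0 <= t) /\
  (forall s t, 0 <= s -> s <= t -> g t <> None -> g s <> None).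

Definition segment_upto {A} (g : R -> option A) (d : R) : Prop :=
  0 <= d /\ forall t, g t <> None <-> 0 <= t < d.

Lemma segment_upto_segment A (g : R -> option A) d : segment_upto g d -> segment g.
Proof.
  intros [Hd H]. split.
  - intros t Ht. apply H in Ht. lra.
  - intros s t Hs Hst Ht. apply H. apply H in Ht. lra.
Qed.

Lemma segment_upto_out A (g : R -> option A) d t : segment_upto g d -> ~ (0 <= t < d) -> g t = None.
Proof. intros [_ H] Ht. destruct (g t) eqn:E; auto. exfalso. apply Ht, H. congruence. Qed.

Lemma segment_neg A (g : R -> option A) t : segment g -> t < 0 -> g t = None.
Proof.
  intros [H _] Ht. destruct (g t) eqn:E; auto. exfalso.
  assert (0 <= t) by (apply H; congruence). lra.
Qed.

(* The domain is [0,d] or [0,d) according as the supremum d is attained. *)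
Lemma bounded_segment_dur A (g : R -> option A) t0 M : segment g -> g t0 <> None ->
  (forall t, g t <> None -> t <= M) ->
  exists D, dur_ok D /\ forall t, g t <> None <-> in_dom D t.
Proof.
  intros [Hpos Hdown] Ht0 HM.
  assert (Hb : bound (fun t => g t <> None)) by (exists M; intros t Ht; apply HM; auto).
  destruct (completeness _ Hb (ex_intro _ t0 Ht0)) as [d [Hub Hlub]].
  assert (t0 <= d) by (apply Hub; auto).
  assert (0 <= t0) by (apply Hpos; auto).
  destruct (classic (g d <> None)) as [Hgd|Hgd].
  - exists (DClosed d); simpl; split; [lra|]. intro t; split.
    + intro Ht; split; [apply Hpos; auto | apply Hub; auto].
    + intros [Ht1 Ht2]. apply Hdown with d; auto.
  - exists (DOpen d); simpl; split; [lra|]. intro t; split.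
    + intro Ht; split; [apply Hpos; auto|].
      assert (t <= d) by (apply Hub; auto).
      destruct (Req_dec t d); [subst; contradiction | lra].
    + intros [Ht1 Ht2].
      destruct (classic (exists t', t < t' /\ g t' <> None)) as [[t' [Ht' Hgt']]|Hno].
      * apply Hdown with t'; auto; lra.
      * assert (d <= t); [|lra]. apply Hlub. intros x Hx.
        destruct (Rle_dec x t); auto. elim Hno; exists x; split; auto; lra.
Qed.

Lemma segment_dur A (g : R -> option A) : segment g ->
  exists D, dur_ok D /\ forall t, g t <> None <-> in_dom D t.
Proof.
  intro Hs. destruct (classic (exists t, g t <> None)) as [[t0 Ht0]|Hempty].
  2:{ exists (DOpen 0); simpl; split; [lra|]. intro t; split; [intro H; elim Hempty; eauto | lra]. }
  destruct (classic (exists M, forall t, g t <> None -> t <= M)) as [[M HM]|Hunb].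
  - eapply bounded_segment_dur; eauto.
  - destruct Hs as [Hpos Hdown]. exists DInf; simpl; split; auto. intro t; split; [apply Hpos|].
    intro Ht. destruct (classic (exists t', t <= t' /\ g t' <> None)) as [[t' [Ht' Hgt']]|Hno].
    + apply Hdown with t'; auto.
    + elim Hunb; exists t; intros x Hx. destruct (Rle_dec x t); auto.
      elim Hno; exists x; split; auto; lra.
Qed.

Lemma tev_segment A (e : traj A) : segment (tev e).
Proof.
  destruct e as [D f Dok Hd]; simpl. split.
  - intros t Ht. apply Hd in Ht. destruct D; simpl in *; lra.
  - intros s t Hs Hst Ht. apply Hd in Ht. apply Hd. destruct D; simpl in *; lra.
Qed.

Lemma tev_mk_traj A (g : R -> option A) : segment g -> tev (mk_traj g) = g.
Proof.
  intro Hs. unfold mk_traj. destruct (excluded_middle_informative _) as [H|H].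
  - destruct (constructive_indefinite_description _ H) as [D HD]. reflexivity.
  - elim H. apply segment_dur; auto.
Qed.

Lemma dur_ext D1 D2 : dur_ok D1 -> dur_ok D2 ->
  (forall t, in_dom D1 t <-> in_dom D2 t) -> D1 = D2.
Proof.
  intros H1 H2 H.
  destruct D1 as [a|a|], D2 as [b|b|]; simpl in *.
  - f_equal. assert (a <= b) by (apply (H a); lra). assert (b <= a) by (apply (H b); lra). lra.
  - exfalso. assert (a < b) by (apply (H a); lra).
    assert ((a+b)/2 <= a) by (apply (H ((a+b)/2)); lra). lra.
  - exfalso. assert (a+1 <= a) by (apply (H (a+1)); lra). lra.
  - exfalso. assert (b < a) by (apply (H b); lra).
    assert ((a+b)/2 <= b) by (apply (H ((a+b)/2)); lra). lra.
  - f_equal. destruct (Rtotal_order a b) as [Hl|[He|Hl]]; auto; exfalso.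
    + assert ((a+b)/2 < a) by (apply (H ((a+b)/2)); lra). lra.
    + assert ((a+b)/2 < b) by (apply (H ((a+b)/2)); lra). lra.
  - exfalso. assert (a < a) by (apply (H a); lra). lra.
  - exfalso. assert (b+1 <= b) by (apply (H (b+1)); lra). lra.
  - exfalso. assert (b < b) by (apply (H b); lra). lra.
  - reflexivity.
Qed.

Lemma traj_ext A (e1 e2 : traj A) : tev e1 = tev e2 -> e1 = e2.
Proof.
  destruct e1 as [D1 f1 o1 h1], e2 as [D2 f2 o2 h2]; simpl. intro Hf; subst f2.
  assert (D1 = D2) by (apply dur_ext; auto; intro t; rewrite <- h1, <- h2; tauto).
  subst D2. f_equal; apply proof_irrelevance.
Qed.

Lemma mk_traj_spec A (g : R -> option A) D : dur_ok D -> (forall t, g t <> None <-> in_dom D t) ->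
  tdur (mk_traj g) = D /\ tev (mk_traj g) = g.
Proof.
  intros Hd Hg. assert (Hs : segment g).
  { split.
    - intros t Ht. apply Hg in Ht. destruct D; simpl in *; lra.
    - intros s t Hs Hst Ht. apply Hg in Ht. apply Hg. destruct D; simpl in *; lra. }
  pose proof (tev_mk_traj Hs) as Hev. split; auto.
  destruct (mk_traj g) as [D' f o h]; simpl in *. subst f.
  apply dur_ext; auto. intro t. rewrite <- h, Hg. tauto.
Qed.

Lemma trj_ext A (m1 m2 : Trj A) : tev (proj1_sig m1) = tev (proj1_sig m2) -> m1 = m2.
Proof.
  destruct m1 as [e1 p1], m2 as [e2 p2]; simpl. intro H.
  apply traj_ext in H. subst e2. f_equal; apply proof_irrelevance.
Qed.

Lemma trj_segment A (m : Trj A) : segment_upto (tev (proj1_sig m)) (trj_len m).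
Proof. destruct m as [[D f o h] [d Hd]]; unfold trj_len; simpl in *. subst D. split; auto. Qed.

Lemma mk_trj_spec A (e : traj A) d : segment_upto (tev e) d ->
  tev (proj1_sig (mk_trj e)) = tev e /\ trj_len (mk_trj e) = d.
Proof.
  intros [Hd H].
  assert (Hdur : tdur e = DOpen d).
  { destruct e as [D f o h]; simpl in *. apply dur_ext; [exact o | simpl; lra |].
    intro t. rewrite <- h. simpl. rewrite H. tauto. }
  unfold mk_trj. destruct (excluded_middle_informative _) as [Hx|Hx].
  - unfold trj_len; simpl. rewrite Hdur. auto.
  - elim Hx. eauto.
Qed.

Definition trj_of A (g : R -> option A) : Trj A := mk_trj (mk_traj g).

Lemma trj_of_spec A (g : R -> option A) d : segment_upto g d ->
  tev (proj1_sig (trj_of g)) = g /\ trj_len (trj_of g) = d.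
Proof.
  intro H. unfold trj_of.
  assert (Hev : tev (mk_traj g) = g) by (apply tev_mk_traj; eapply segment_upto_segment; eauto).
  rewrite <- Hev in H. destruct (mk_trj_spec _ H) as [E1 E2]. rewrite E1, Hev. auto.
Qed.

Lemma decP_true (P : Prop) : P -> decP P = true.
Proof. unfold decP; destruct (excluded_middle_informative P); tauto. Qed.

Lemma decP_false (P : Prop) : ~ P -> decP P = false.
Proof. unfold decP; destruct (excluded_middle_informative P); tauto. Qed.

Lemma option_eq_iff A (o1 o2 : option A) : (forall v, o1 = Some v <-> o2 = Some v) -> o1 = o2.
Proof.
  intro H. destruct o1 as [a|]; [symmetry; apply H; auto|].
  destruct o2 as [b|]; auto. apply H; auto.
Qed.

(** * The monads [H_S] *)

Section GraphView.
Context {S X : Type}.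

Definition hgraph (p : H S X) : R -> option S := tev (H_traj p).

Definition hend (p : H S X) : option (R * X) :=
  match p with inl (m, x) => Some (trj_len m, x) | inr _ => None end.

Lemma hgraph_segment p : segment (hgraph p).
Proof.
  destruct p as [[m x]|e]; unfold hgraph; simpl;
    [eapply segment_upto_segment; apply trj_segment | apply tev_segment].
Qed.

Lemma hgraph_nonneg p t : hgraph p t <> None -> 0 <= t.
Proof. apply (proj1 (hgraph_segment p)). Qed.

Lemma hgraph_down p s t : 0 <= s -> s <= t -> hgraph p t <> None -> hgraph p s <> None.
Proof. apply (proj2 (hgraph_segment p)). Qed.

Lemma hend_segment p d x : hend p = Some (d, x) -> segment_upto (hgraph p) d.
Proof.
  destruct p as [[m y]|e]; simpl; intro E; [|discriminate].
  injection E as <- <-. apply trj_segment.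
Qed.

Lemma H_ext p q : hgraph p = hgraph q -> hend p = hend q -> p = q.
Proof.
  destruct p as [[m x]|e], q as [[n y]|e']; simpl; intros H1 H2; try discriminate.
  - injection H2; intros; subst. do 2 f_equal. apply trj_ext; auto.
  - f_equal. apply traj_ext; auto.
Qed.

Lemma H_char p q : (forall t a, hgraph p t = Some a <-> hgraph q t = Some a) ->
  (forall z, hend p = Some z <-> hend q = Some z) -> p = q.
Proof.
  intros H1 H2. apply H_ext; [apply functional_extensionality; intro t|]; apply option_eq_iff; auto.
Qed.

End GraphView.

Arguments hend_segment {S X p d x} _.

Definition gcat {A} (d : R) (g1 g2 : R -> option A) : R -> option A :=
  fun t => if Rlt_dec t d then g1 t else g2 (t - d).

Lemma gcat_segment A (g1 g2 : R -> option A) d :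
  segment_upto g1 d -> segment g2 -> segment (gcat d g1 g2).
Proof.
  intros [Hd H1] [H2 H3]. unfold gcat. split.
  - intros t. destruct (Rlt_dec t d); intro H; [apply H1 in H | apply H2 in H]; lra.
  - intros s t Hs Hst. destruct (Rlt_dec t d), (Rlt_dec s d); intro H.
    + apply H1. apply H1 in H. lra.
    + lra.
    + apply H1. lra.
    + apply H3 with (t - d); auto; lra.
Qed.

Lemma gcat_segment_upto A (g1 g2 : R -> option A) d d2 :
  segment_upto g1 d -> segment_upto g2 d2 -> segment_upto (gcat d g1 g2) (d + d2).
Proof.
  intros [Hd H1] [Hd2 H2]. unfold gcat. split; [lra|]. intro t.
  destruct (Rlt_dec t d); [rewrite H1 | rewrite H2]; lra.
Qed.

Lemma gcat_empty_l A (g : R -> option A) : segment g -> gcat 0 (fun _ => None) g = g.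
Proof.
  intro Hs. apply functional_extensionality; intro t. unfold gcat.
  destruct (Rlt_dec t 0); [symmetry; apply segment_neg; auto | f_equal; ring].
Qed.

Lemma gcat_empty_r A (g : R -> option A) d : segment_upto g d -> gcat d g (fun _ => None) = g.
Proof.
  intro Hs. apply functional_extensionality; intro t. unfold gcat.
  destruct (Rlt_dec t d); auto. symmetry; apply (segment_upto_out Hs). lra.
Qed.

Lemma gcat_assoc A (g1 g2 g3 : R -> option A) d1 d2 : 0 <= d2 ->
  gcat (d1 + d2) (gcat d1 g1 g2) g3 = gcat d1 g1 (gcat d2 g2 g3).
Proof.
  intro Hd2. apply functional_extensionality; intro t. unfold gcat.
  destruct (Rlt_dec t (d1 + d2)), (Rlt_dec t d1), (Rlt_dec (t - d1) d2); try lra; auto.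
  replace (t - (d1 + d2)) with (t - d1 - d2) by ring; reflexivity.
Qed.

Lemma tev_tconcat S (m : Trj S) (e : traj S) :
  tev (tconcat m e) = gcat (trj_len m) (tev (proj1_sig m)) (tev e).
Proof. apply tev_mk_traj, gcat_segment; [apply trj_segment | apply tev_segment]. Qed.

Lemma trj_cat_spec S (m n : Trj S) :
  tev (proj1_sig (trj_cat m n)) = gcat (trj_len m) (tev (proj1_sig m)) (tev (proj1_sig n)) /\
  trj_len (trj_cat m n) = trj_len m + trj_len n.
Proof.
  unfold trj_cat. rewrite <- tev_tconcat. apply mk_trj_spec. rewrite tev_tconcat.
  apply gcat_segment_upto; apply trj_segment.
Qed.

Definition shift_end {X} (d : R) (en : option (R * X)) : option (R * X) :=
  match en with Some (d', x) => Some (d + d', x) | None => None end.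

Lemma shift_end_Some X d (o : option (R * X)) r y :
  shift_end d o = Some (r, y) <-> o = Some (r - d, y).
Proof.
  destruct o as [[d' x]|]; simpl; split; intro H; try discriminate;
    injection H; intros; subst; do 2 f_equal; ring.
Qed.

Section BindH.
Context {S X Y : Type} (k : X -> H S Y).

Lemma hgraph_bindH p :
  hgraph (bindH k p) =
  match hend p with Some (d, x) => gcat d (hgraph p) (hgraph (k x)) | None => hgraph p end.
Proof.
  destruct p as [[m x]|e]; simpl; auto.
  unfold hgraph; simpl.
  destruct (k x) as [[n y]|e']; simpl; [apply trj_cat_spec | apply tev_tconcat].
Qed.

Lemma hend_bindH p :
  hend (bindH k p) = match hend p with Some (d, x) => shift_end d (hend (k x)) | None => None end.
Proof.
  destruct p as [[m x]|e]; simpl; auto.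
  destruct (k x) as [[n y]|e']; simpl; auto. rewrite (proj2 (trj_cat_spec m n)). auto.
Qed.

Lemma hgraph_bindH_Some p t a :
  hgraph (bindH k p) t = Some a <->
  match hend p with
  | Some (d, x) => (t < d /\ hgraph p t = Some a) \/ (d <= t /\ hgraph (k x) (t - d) = Some a)
  | None => hgraph p t = Some a end.
Proof.
  rewrite hgraph_bindH. destruct (hend p) as [[d x]|]; [|tauto]. unfold gcat.
  destruct (Rlt_dec t d); split; intuition lra.
Qed.

Lemma bindH_unterminated p : hend p = None ->
  hgraph (bindH k p) = hgraph p /\ hend (bindH k p) = None.
Proof. destruct p as [[m x]|e]; simpl; auto; discriminate. Qed.

End BindH.

Section HMonad.
Context {S : Type}.

Lemma bindH_etaH_l X Y (k : X -> H S Y) x : bindH k (etaH S x) = k x.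
Proof.
  apply H_ext.
  - rewrite hgraph_bindH. apply gcat_empty_l, hgraph_segment.
  - rewrite hend_bindH. simpl. destruct (hend (k x)) as [[d y]|]; simpl; auto.
    do 2 f_equal. change (0 + d = d). ring.
Qed.

Lemma bindH_etaH_r X (p : H S X) : bindH (@etaH S X) p = p.
Proof.
  apply H_ext.
  - rewrite hgraph_bindH. destruct (hend p) as [[d x]|] eqn:E; auto.
    apply gcat_empty_r, (hend_segment E).
  - rewrite hend_bindH. destruct (hend p) as [[d x]|]; auto. simpl.
    do 2 f_equal. change (d + 0 = d). ring.
Qed.

Lemma bindH_assoc X Y Z (k1 : X -> H S Y) (k2 : Y -> H S Z) (p : H S X) :
  bindH k2 (bindH k1 p) = bindH (fun x => bindH k2 (k1 x)) p.
Proof.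
  apply H_ext.
  - rewrite !hgraph_bindH, !hend_bindH. destruct (hend p) as [[d x]|]; auto.
    rewrite hgraph_bindH. destruct (hend (k1 x)) as [[d1 y]|] eqn:E1; simpl; auto.
    apply gcat_assoc, (proj1 (hend_segment E1)).
  - rewrite !hend_bindH. destruct (hend p) as [[d x]|]; auto.
    rewrite hend_bindH. destruct (hend (k1 x)) as [[d1 y]|]; simpl; auto.
    destruct (hend (k2 y)) as [[d2 z]|]; simpl; auto. do 2 f_equal; ring.
Qed.

End HMonad.

Lemma tev_tmap S S' (g : S -> S') (e : traj S) :
  tev (tmap g e) = fun t => option_map g (tev e t).
Proof.
  apply tev_mk_traj. destruct (tev_segment e) as [H1 H2]. split.
  - intros t H. apply H1. destruct (tev e t); simpl in *; congruence.
  - intros s t Hs Hst H. specialize (H2 s t Hs Hst).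
    destruct (tev e t), (tev e s); simpl in *; try congruence. elim H2; congruence.
Qed.

Lemma tmap_segment_upto S S' (g : S -> S') (m : Trj S) :
  segment_upto (tev (tmap g (proj1_sig m))) (trj_len m).
Proof.
  rewrite tev_tmap. destruct (trj_segment m) as [Hd H]. split; auto. intro t. rewrite <- H.
  destruct (tev (proj1_sig m) t); simpl; split; congruence.
Qed.

Lemma hgraph_mapH S S' X (g : S -> S') (p : H S X) :
  hgraph (mapH g p) = fun t => option_map g (hgraph p t).
Proof.
  destruct p as [[m x]|e]; unfold hgraph; simpl; [|apply tev_tmap].
  rewrite (proj1 (mk_trj_spec _ (tmap_segment_upto g m))). apply tev_tmap.
Qed.

Lemma hend_mapH S S' X (g : S -> S') (p : H S X) : hend (mapH g p) = hend p.
Proof.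
  destruct p as [[m x]|e]; simpl; auto.
  rewrite (proj2 (mk_trj_spec _ (tmap_segment_upto g m))). auto.
Qed.

Definition left_prefix {A B} (g : R -> option (A + B)) : R -> option A :=
  fun t => if decP (forall s, 0 <= s <= t -> exists a, g s = Some (inl a))
           then match g t with Some (inl a) => Some a | _ => None end else None.

Lemma left_prefix_segment A B (g : R -> option (A + B)) : segment g -> segment (left_prefix g).
Proof.
  intros [H1 H2]. unfold left_prefix. split.
  - intros t. destruct (decP _); [|congruence].
    intro H. apply H1. destruct (g t) as [[a|b]|]; congruence.
  - intros s t Hs Hst. unfold decP at 1.
    destruct (excluded_middle_informative _) as [Hx|Hx]; [|congruence]. intros _.
    rewrite decP_true by (intros u Hu; apply Hx; lra).
    destruct (Hx s) as [a Ha]; [lra|]. rewrite Ha. congruence.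
Qed.

Lemma tev_lprefix S Y (e : traj (S + Y)) : tev (lprefix e) = left_prefix (tev e).
Proof. apply tev_mk_traj, left_prefix_segment, tev_segment. Qed.

Lemma lprefix_segment_upto S Y (m : Trj (S + Y)) :
  (forall t, tev (lprefix (proj1_sig m)) t <> None <-> tev (proj1_sig m) t <> None) ->
  segment_upto (tev (lprefix (proj1_sig m))) (trj_len m).
Proof.
  intro Hfull. destruct (trj_segment m) as [Hd H]. split; auto. intro t. rewrite Hfull. auto.
Qed.

Lemma hgraph_tau S Y X (p : H (S + Y) X) : hgraph (tau p) = left_prefix (hgraph p).
Proof.
  destruct p as [[m x]|e]; unfold hgraph; simpl; [|apply tev_lprefix].
  unfold decP. destruct (excluded_middle_informative _) as [Hx|Hx]; simpl; [|apply tev_lprefix].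
  rewrite (proj1 (mk_trj_spec _ (lprefix_segment_upto m Hx))). apply tev_lprefix.
Qed.

Lemma hend_tau S Y X (p : H (S + Y) X) :
  hend (tau p) =
  match hend p with
  | Some (d, x) =>
      if decP (forall t, left_prefix (hgraph p) t <> None <-> hgraph p t <> None)
      then Some (d, x) else None
  | None => None end.
Proof.
  destruct p as [[m x]|e]; simpl; auto.
  unfold hgraph; simpl. rewrite <- tev_lprefix.
  unfold decP. destruct (excluded_middle_informative _) as [Hx|Hx]; simpl; auto.
  rewrite (proj2 (mk_trj_spec _ (lprefix_segment_upto m Hx))). auto.
Qed.

(** * Prefix order and Kleene iteration *)

Definition prefix {A} (g1 g2 : R -> option A) : Prop := forall t, g1 t <> None -> g2 t = g1 t.

Lemma prefix_trans A (g1 g2 g3 : R -> option A) : prefix g1 g2 -> prefix g2 g3 -> prefix g1 g3.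
Proof. intros H1 H2 t Ht. rewrite H2; auto. rewrite H1; auto. Qed.

Lemma prefix_antisym A (g1 g2 : R -> option A) : prefix g1 g2 -> prefix g2 g1 -> g1 = g2.
Proof.
  intros H1 H2. apply functional_extensionality; intro t.
  destruct (g1 t) eqn:E1; [rewrite H1; congruence|].
  destruct (g2 t) eqn:E2; auto. rewrite <- E1, H2; congruence.
Qed.

Section Order.
Context {S X : Type}.

Lemma Hle_iff (p q : H S X) :
  Hle p q <-> p = q \/ (hend p = None /\ prefix (hgraph p) (hgraph q)).
Proof.
  unfold Hle. split.
  - intros [H|[e [He Hp]]]; auto. right. subst p. split; auto.
  - intros [H|[H1 H2]]; auto. right. destruct p as [[m x]|e]; simpl in H1; try discriminate.
    exists e; split; auto.
Qed.

Lemma Hle_refl (p : H S X) : Hle p p.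
Proof. left; auto. Qed.

Lemma Hle_trans (p q r : H S X) : Hle p q -> Hle q r -> Hle p r.
Proof.
  rewrite !Hle_iff. intros [H1|[H1 H2]] [H3|[H3 H4]]; subst; auto.
  right; split; auto. eapply prefix_trans; eauto.
Qed.

Lemma Hle_antisym (p q : H S X) : Hle p q -> Hle q p -> p = q.
Proof.
  rewrite !Hle_iff. intros [H1|[H1 H2]] [H3|[H3 H4]]; subst; auto.
  apply H_ext; [apply prefix_antisym; auto | congruence].
Qed.

Lemma Hle_prefix (p q : H S X) : Hle p q -> prefix (hgraph p) (hgraph q).
Proof. rewrite Hle_iff. intros [<-|[_ H]]; [intros t _; auto | exact H]. Qed.

Definition botH : H S X := inr (traj_empty S).

Lemma botH_le p : Hle botH p.
Proof. rewrite Hle_iff. right. split; auto. intros t H. elim H; reflexivity. Qed.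

Definition chain (c : nat -> H S X) : Prop := forall n, Hle (c n) (c (Datatypes.S n)).

Lemma chain_le c : chain c -> forall n m, (n <= m)%nat -> Hle (c n) (c m).
Proof. intros Hc n m Hnm. induction Hnm; [apply Hle_refl | eapply Hle_trans; eauto]. Qed.

Lemma chain_prefix c : chain c -> forall n m, (n <= m)%nat -> prefix (hgraph (c n)) (hgraph (c m)).
Proof. intros Hc n m Hnm. apply Hle_prefix, chain_le; auto. Qed.

Lemma chain_stationary c : chain c -> forall n m, (n <= m)%nat -> hend (c n) <> None -> c m = c n.
Proof.
  intros Hc n m Hnm Hn. pose proof (chain_le Hc Hnm) as H. rewrite Hle_iff in H.
  destruct H as [H|[H _]]; auto. contradiction.
Qed.

Lemma chain_agree c : chain c -> forall n m t, hgraph (c n) t <> None -> hgraph (c m) t <> None ->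
  hgraph (c n) t = hgraph (c m) t.
Proof.
  intros Hc n m t Hn Hm. destruct (Nat.le_ge_cases n m) as [Hnm|Hnm].
  - symmetry; apply (chain_prefix Hc Hnm); auto.
  - apply (chain_prefix Hc Hnm); auto.
Qed.

Definition supg (c : nat -> H S X) (t : R) : option S :=
  match excluded_middle_informative (exists n, hgraph (c n) t <> None) with
  | left Hx => hgraph (c (proj1_sig (constructive_indefinite_description _ Hx))) t
  | right _ => None end.

(* A chain either reaches a terminated element, after which it is constant,
   or consists of unterminated trajectories whose union is its supremum. *)
Definition supH (c : nat -> H S X) : H S X :=
  match excluded_middle_informative (exists n, hend (c n) <> None) with
  | left Hx => c (proj1_sig (constructive_indefinite_description _ Hx))
  | right _ => inr (mk_traj (supg c)) end.

Lemma supg_Some c : chain c ->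
  forall t v, supg c t = Some v <-> exists n, hgraph (c n) t = Some v.
Proof.
  intros Hc t v. unfold supg. destruct (excluded_middle_informative _) as [Hx|Hx].
  - destruct (constructive_indefinite_description _ Hx) as [n Hn]; simpl. split; eauto.
    intros [m Hm]. rewrite <- Hm. apply chain_agree; auto; congruence.
  - split; [discriminate|]. intros [n Hn]. elim Hx. exists n; congruence.
Qed.

Lemma supg_segment c : chain c -> segment (supg c).
Proof.
  intro Hc. split.
  - intros t Ht. destruct (supg c t) eqn:E; [|congruence].
    apply supg_Some in E as [n Hn]; auto. apply (hgraph_nonneg (c n)). congruence.
  - intros s t Hs Hst Ht. destruct (supg c t) eqn:E; [|congruence].
    apply supg_Some in E as [n Hn]; auto.
    destruct (hgraph (c n) s) eqn:E2.
    + rewrite (proj2 (supg_Some Hc s s1)); [congruence | eauto].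
    + exfalso. apply (hgraph_down (c n) Hs Hst); congruence.
Qed.

Lemma hgraph_supH c : chain c ->
  forall t v, hgraph (supH c) t = Some v <-> exists n, hgraph (c n) t = Some v.
Proof.
  intros Hc t v. unfold supH. destruct (excluded_middle_informative _) as [Hx|Hx].
  - destruct (constructive_indefinite_description _ Hx) as [N HN]; simpl. split; eauto.
    intros [m Hm]. destruct (Nat.le_ge_cases m N) as [H|H].
    + rewrite <- Hm. apply (chain_prefix Hc H). congruence.
    + rewrite (chain_stationary Hc H HN) in Hm. auto.
  - unfold hgraph at 1; simpl. rewrite tev_mk_traj by (apply supg_segment; auto).
    apply supg_Some; auto.
Qed.

Lemma hend_supH c : chain c ->
  forall z, hend (supH c) = Some z <-> exists n, hend (c n) = Some z.
Proof.
  intros Hc z. unfold supH. destruct (excluded_middle_informative _) as [Hx|Hx].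
  - destruct (constructive_indefinite_description _ Hx) as [N HN]; simpl. split; eauto.
    intros [m Hm]. destruct (Nat.le_ge_cases m N) as [H|H].
    + rewrite (chain_stationary Hc H) by congruence. auto.
    + rewrite (chain_stationary Hc H HN) in Hm. auto.
  - simpl. split; [discriminate|]. intros [n Hn]. elim Hx; exists n; congruence.
Qed.

Lemma supH_char c p : chain c ->
  (forall t v, hgraph p t = Some v <-> exists n, hgraph (c n) t = Some v) ->
  (forall z, hend p = Some z <-> exists n, hend (c n) = Some z) -> supH c = p.
Proof.
  intros Hc H1 H2. apply H_char; intros.
  - rewrite hgraph_supH, H1; auto; tauto.
  - rewrite hend_supH, H2; auto; tauto.
Qed.

Lemma supH_stationary c N : chain c -> (forall m, (N <= m)%nat -> c m = c N) -> supH c = c N.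
Proof.
  intros Hc HN. apply supH_char; auto.
  - intros t v. split; eauto. intros [m Hm]. destruct (Nat.le_ge_cases m N) as [H|H].
    + rewrite <- Hm. apply (chain_prefix Hc H). congruence.
    + rewrite HN in Hm; auto.
  - intros z. split; eauto. intros [m Hm]. destruct (Nat.le_ge_cases m N) as [H|H].
    + rewrite (chain_stationary Hc H) by congruence. auto.
    + rewrite HN in Hm; auto.
Qed.

Lemma supH_terminated c n : chain c -> hend (c n) <> None -> supH c = c n.
Proof.
  intros Hc Hn. apply supH_stationary; auto. intros m Hm. apply (chain_stationary Hc Hm Hn).
Qed.

Lemma supH_ub c n : chain c -> Hle (c n) (supH c).
Proof.
  intro Hc. rewrite Hle_iff. destruct (hend (c n)) as [z|] eqn:E.
  - left. symmetry. apply supH_terminated; [exact Hc | congruence].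
  - right. split; auto. intros t Ht. destruct (hgraph (c n) t) eqn:E2; [|congruence].
    apply hgraph_supH; eauto.
Qed.

Lemma supH_least c u : chain c -> (forall n, Hle (c n) u) -> Hle (supH c) u.
Proof.
  intros Hc Hu. destruct (hend (supH c)) as [z|] eqn:E.
  - apply hend_supH in E as [n Hn]; auto.
    rewrite (supH_terminated n Hc) by congruence. apply Hu.
  - rewrite Hle_iff. right. split; auto. intros t Ht.
    destruct (hgraph (supH c) t) eqn:E2; [|congruence].
    apply hgraph_supH in E2 as [n Hn]; auto. rewrite <- Hn. apply (Hle_prefix (Hu n)). congruence.
Qed.

Lemma supH_const p : supH (fun _ => p) = p.
Proof. apply supH_stationary with (N := 0%nat); [intro; apply Hle_refl | auto]. Qed.

Lemma supH_shift c : chain c -> supH (fun n => c (Datatypes.S n)) = supH c.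
Proof.
  intro Hc. apply supH_char; [intro n; apply Hc | |].
  - intros t v. rewrite hgraph_supH; auto. split; intros [n Hn]; eauto.
    exists n. rewrite <- Hn. apply (chain_prefix Hc (le_S _ _ (le_n n)) t). congruence.
  - intros z. rewrite hend_supH; auto. split; intros [n Hn]; eauto.
    exists n. rewrite (chain_stationary Hc (le_S _ _ (le_n n))) by congruence. auto.
Qed.

End Order.

Section BindOrder.
Context {S : Type}.

Lemma prefix_bindH X Y (k : X -> H S Y) q : prefix (hgraph q) (hgraph (bindH k q)).
Proof.
  intros t Ht. rewrite hgraph_bindH. destruct (hend q) as [[d x]|] eqn:E; auto.
  unfold gcat. destruct (Rlt_dec t d); auto. exfalso.
  apply (proj2 (hend_segment E)) in Ht. lra.
Qed.

Lemma bindH_mono X Y (k k' : X -> H S Y) p q :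
  Hle p q -> (forall x, Hle (k x) (k' x)) -> Hle (bindH k p) (bindH k' q).
Proof.
  intros Hpq Hk. rewrite Hle_iff in Hpq. rewrite Hle_iff. destruct Hpq as [<-|[Hp1 Hp2]].
  - destruct (hend p) as [[d x]|] eqn:E.
    + specialize (Hk x). rewrite Hle_iff in Hk. destruct Hk as [Hk|[Hk1 Hk2]].
      * left. apply H_ext; rewrite ?hgraph_bindH, ?hend_bindH, E, Hk; auto.
      * right. rewrite !hgraph_bindH, !hend_bindH, E, Hk1. split; auto.
        intros t Ht. unfold gcat in *. destruct (Rlt_dec t d); auto.
    + left. apply H_ext; rewrite ?hgraph_bindH, ?hend_bindH, E; auto.
  - right. rewrite hgraph_bindH, hend_bindH, Hp1. split; auto.
    eapply prefix_trans; eauto. apply prefix_bindH.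
Qed.

Lemma bindH_supH_l X Y (k : nat -> X -> H S Y) p : (forall x, chain (fun n => k n x)) ->
  bindH (fun x => supH (fun n => k n x)) p = supH (fun n => bindH (k n) p).
Proof.
  intro Hc. symmetry. apply supH_char.
  - intro n. apply bindH_mono; [apply Hle_refl | intro x; apply Hc].
  - intros t v. rewrite hgraph_bindH_Some. setoid_rewrite hgraph_bindH_Some.
    destruct (hend p) as [[d x]|]; [rewrite hgraph_supH by auto|].
    + split; [intros [H|[H [n Hn]]]; [exists 0%nat | exists n]; tauto|].
      intros [n [H|H]]; [left | right; split; [|exists n]]; tauto.
    + split; [intro H; exists 0%nat | intros [_ H]]; auto.
  - intros z. rewrite hend_bindH. setoid_rewrite hend_bindH.
    destruct (hend p) as [[d x]|].
    + destruct z as [r y]. rewrite shift_end_Some, hend_supH by auto.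
      setoid_rewrite shift_end_Some. tauto.
    + split; [discriminate | intros [_ H]; discriminate].
Qed.

Lemma bindH_supH_r X Y (k : X -> H S Y) (c : nat -> H S X) : chain c ->
  bindH k (supH c) = supH (fun n => bindH k (c n)).
Proof.
  intro Hc. assert (Hc' : chain (fun n => bindH k (c n))).
  { intro n. apply bindH_mono; [apply Hc | intro; apply Hle_refl]. }
  destruct (classic (exists n, hend (c n) <> None)) as [[N HN]|Hno].
  - rewrite (supH_terminated N Hc HN). symmetry. apply (supH_stationary Hc'). intros m Hm.
    rewrite (chain_stationary Hc Hm HN). auto.
  - assert (Hcn : forall n, hend (c n) = None).
    { intro n. destruct (hend (c n)) eqn:E; auto. elim Hno; exists n; congruence. }
    assert (Hs : hend (supH c) = None).
    { destruct (hend (supH c)) as [z|] eqn:E; auto.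
      apply hend_supH in E as [n Hn]; auto. rewrite Hcn in Hn; discriminate. }
    symmetry. apply supH_char; auto; intros.
    + rewrite (proj1 (bindH_unterminated k _ Hs)), hgraph_supH by auto.
      split; intros [n Hn]; exists n; rewrite (proj1 (bindH_unterminated k _ (Hcn n))) in *; auto.
    + rewrite (proj2 (bindH_unterminated k _ Hs)). split; [discriminate|].
      intros [n Hn]. rewrite (proj2 (bindH_unterminated k _ (Hcn n))) in Hn. discriminate.
Qed.

End BindOrder.

Fixpoint iterH_approx {S X Y} (f : X -> H S (Y + X)) (n : nat) : X -> H S Y :=
  match n with
  | O => fun _ => botH
  | Datatypes.S n => iterH_step f (iterH_approx f n)
  end.

Section Kleene.
Context {S X Y : Type} (f : X -> H S (Y + X)).

Let kleene : X -> H S Y := fun x => supH (fun n => iterH_approx f n x).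

Lemma copair_le A (e : A -> H S Y) (g1 g2 : X -> H S Y) : (forall x, Hle (g1 x) (g2 x)) ->
  forall v, Hle (copair e g1 v) (copair e g2 v).
Proof. intros H [a|x]; simpl; auto. apply Hle_refl. Qed.

Lemma iterH_approx_chain x : chain (fun n => iterH_approx f n x).
Proof.
  intro n. revert x. induction n; intro x; [apply botH_le|].
  apply bindH_mono; [apply Hle_refl | apply copair_le; exact IHn].
Qed.

Lemma kleene_fix x : kleene x = iterH_step f kleene x.
Proof.
  unfold iterH_step.
  replace (copair (@etaH S Y) kleene)
    with (fun v => supH (fun n => copair (@etaH S Y) (iterH_approx f n) v)).
  - rewrite bindH_supH_l; [symmetry; exact (supH_shift (iterH_approx_chain x))|].
    intros [y|x'] n; [apply Hle_refl | apply iterH_approx_chain].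
  - apply functional_extensionality; intros [y|x']; [exact (supH_const _) | reflexivity].
Qed.

Lemma kleene_least (g : X -> H S Y) : (forall x, g x = iterH_step f g x) ->
  forall x, Hle (kleene x) (g x).
Proof.
  intros Hg x. apply supH_least; [apply iterH_approx_chain|].
  intro n. revert x. induction n; intro x; [apply botH_le|].
  rewrite Hg. apply bindH_mono; [apply Hle_refl | apply copair_le; auto].
Qed.

Lemma iterH_kleene x : iterH f x = supH (fun n => iterH_approx f n x).
Proof.
  unfold iterH.
  match goal with |- epsilon ?i ?P x = _ => assert (HP : P (epsilon i P)) end.
  { apply epsilon_spec. exists kleene. split; [apply kleene_fix | apply kleene_least]. }
  destruct HP as [Hfix Hleast].
  apply Hle_antisym; [exact (Hleast kleene kleene_fix x) | exact (kleene_least _ Hfix x)].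
Qed.

Lemma iterH_fix x : iterH f x = iterH_step f (iterH f) x.
Proof.
  replace (iterH f) with kleene; [apply kleene_fix|].
  apply functional_extensionality; intro; symmetry; apply iterH_kleene.
Qed.

End Kleene.

(** * Cutting trajectories along partial maps *)

(* The trajectory is cut at the first point whose value is undefined under [M]. *)
Definition restrict {A S X} (M : A -> S + unit) (p : H A X) : H S X :=
  tau (mapH M p : H (S + unit) X).

Definition defined_upto {A S} (M : A -> S + unit) (g : R -> option A) (t : R) : Prop :=
  forall s, 0 <= s <= t -> exists v a, g s = Some v /\ M v = inl a.

Definition pmap_le {A S} (M M' : A -> S + unit) : Prop := forall v a, M v = inl a -> M' v = inl a.

Definition pmap_comp {A B S} (N : B -> S + unit) (M : A -> B + unit) : A -> S + unit :=
  fun v => match M v with inl b => N b | inr u => inr u end.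

Section DefinedUpto.
Context {A S : Type} (M : A -> S + unit).

Lemma defined_upto_le g t s : defined_upto M g t -> s <= t -> defined_upto M g s.
Proof. intros H Hs u Hu. apply H. lra. Qed.

Lemma defined_upto_agree g1 g2 t : (forall s, 0 <= s <= t -> g1 s = g2 s) ->
  defined_upto M g1 t -> defined_upto M g2 t.
Proof. intros Hg H s Hs. rewrite <- Hg by exact Hs. apply H, Hs. Qed.

Lemma defined_upto_prefix g1 g2 t : prefix g1 g2 -> defined_upto M g1 t -> defined_upto M g2 t.
Proof.
  intros Hp H s Hs. destruct (H s Hs) as [v [a [Hv Ha]]]. exists v, a. split; auto.
  rewrite Hp; congruence.
Qed.

Lemma defined_upto_pmap_le M' g t : pmap_le M M' -> defined_upto M g t -> defined_upto M' g t.
Proof. intros HM H s Hs. destruct (H s Hs) as [v [a [Hv Ha]]]. exists v, a; split; auto. Qed.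

Lemma defined_upto_gcat g1 g2 d t : 0 <= d -> (forall s, 0 <= s < d -> defined_upto M g1 s) ->
  defined_upto M (gcat d g1 g2) t <->
  (t < d -> defined_upto M g1 t) /\ (d <= t -> defined_upto M g2 (t - d)).
Proof.
  intros Hd Hf. unfold gcat. split.
  - intros H. split.
    + intros Ht s Hs. destruct (H s) as [v [a [Hv Ha]]]; [lra|].
      destruct (Rlt_dec s d); [eauto | lra].
    + intros Ht s Hs. destruct (H (s + d)) as [v [a [Hv Ha]]]; [lra|].
      destruct (Rlt_dec (s + d) d); [lra|]. replace (s + d - d) with s in Hv by ring. eauto.
  - intros [H1 H2] s Hs. destruct (Rlt_dec s d).
    + apply (Hf s); lra.
    + apply (H2 ltac:(lra) (s - d)). lra.
Qed.

Lemma left_prefix_map_Some g t a :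
  left_prefix (fun s => option_map M (g s)) t = Some a <->
  defined_upto M g t /\ exists v, g t = Some v /\ M v = inl a.
Proof.
  unfold left_prefix, decP. destruct (excluded_middle_informative _) as [Hx|Hx]; split.
  - intro H. split.
    + intros s Hs. destruct (Hx s Hs) as [b Hb].
      destruct (g s) as [v|]; simpl in Hb; [|discriminate]. exists v, b. injection Hb; auto.
    + destruct (g t) as [v|]; simpl in H; [|discriminate]. exists v. split; auto.
      destruct (M v); [congruence | discriminate].
  - intros [_ [v [Hv HM]]]. rewrite Hv. simpl. rewrite HM. auto.
  - discriminate.
  - intros [Hok _]. elim Hx. intros s Hs. destruct (Hok s Hs) as [v [b [Hv Hb]]].
    exists b. rewrite Hv; simpl; rewrite Hb; auto.
Qed.

Lemma left_prefix_map_total g d : segment_upto g d ->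
  (forall t, left_prefix (fun s => option_map M (g s)) t <> None <-> option_map M (g t) <> None) <->
  (forall t, 0 <= t < d -> defined_upto M g t).
Proof.
  intros [Hd Hg]. split.
  - intros Hf t Ht.
    destruct (left_prefix (fun s => option_map M (g s)) t) as [a|] eqn:E.
    + apply left_prefix_map_Some in E. tauto.
    + exfalso. apply Hg in Ht. apply (proj2 (Hf t)); [destruct (g t); simpl; congruence | exact E].
  - intros Hok t. split.
    + destruct (left_prefix (fun s => option_map M (g s)) t) as [a|] eqn:E; [|congruence].
      apply left_prefix_map_Some in E as [_ [v [Hv _]]]. rewrite Hv. discriminate.
    + intro H. assert (Ht : g t <> None) by (destruct (g t); simpl in *; congruence).
      apply Hg in Ht. destruct (Hok t Ht t) as [v [a [Hv Ha]]]; [lra|].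
      rewrite (proj2 (left_prefix_map_Some g t a)); [discriminate|].
      split; [apply Hok | exists v]; auto.
Qed.

End DefinedUpto.

Section Restrict.
Context {A S X : Type} (M : A -> S + unit).

Lemma hgraph_restrict (p : H A X) t a :
  hgraph (restrict M p) t = Some a <->
  defined_upto M (hgraph p) t /\ exists v, hgraph p t = Some v /\ M v = inl a.
Proof. unfold restrict. rewrite hgraph_tau, hgraph_mapH. apply left_prefix_map_Some. Qed.

Lemma hend_restrict (p : H A X) z :
  hend (restrict M p) = Some z <->
  hend p = Some z /\ forall t, 0 <= t < fst z -> defined_upto M (hgraph p) t.
Proof.
  unfold restrict. rewrite hend_tau, hend_mapH, hgraph_mapH.
  destruct (hend p) as [[d x]|] eqn:E; [|split; [discriminate | intros [H _]; discriminate]].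
  pose proof (left_prefix_map_total M (hend_segment E)) as Htotal.
  destruct (classic (forall t, 0 <= t < d -> defined_upto M (hgraph p) t)) as [Hf|Hnf].
  - rewrite decP_true by (apply Htotal; exact Hf).
    split; [intro H; split; auto; injection H as <-; exact Hf | tauto].
  - rewrite decP_false by (rewrite Htotal; exact Hnf).
    split; [discriminate|]. intros [H1 H2]. injection H1 as <-. contradiction.
Qed.

Lemma restrict_unterminated (p : H A X) : hend p = None -> hend (restrict M p) = None.
Proof.
  intro E. destruct (hend (restrict M p)) as [z|] eqn:E2; auto.
  apply hend_restrict in E2 as [E2 _]. congruence.
Qed.

Lemma restrict_etaH (x : X) : restrict M (etaH A x) = etaH S x.
Proof.
  apply H_char.
  - intros t a. rewrite hgraph_restrict. simpl. split; [intros [_ [v [Hv _]]] |]; discriminate.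
  - intros z. rewrite hend_restrict. simpl. split; [intros [H _]; auto | intro H; split; auto].
    intros t Ht. injection H as <-. cbn in Ht. lra.
Qed.

Lemma restrict_botH : restrict M (botH : H A X) = botH.
Proof.
  apply H_char.
  - intros t a. rewrite hgraph_restrict. simpl. split; [intros [_ [v [Hv _]]] |]; discriminate.
  - intros z. rewrite hend_restrict. simpl. split; [intros [H _] |]; discriminate.
Qed.

Lemma restrict_mono (p q : H A X) : Hle p q -> Hle (restrict M p) (restrict M q).
Proof.
  rewrite !Hle_iff. intros [<-|[H1 H2]]; auto. right.
  split; [apply restrict_unterminated; auto|].
  intros t Ht. destruct (hgraph (restrict M p) t) as [a|] eqn:E; [|congruence].
  apply hgraph_restrict in E as [Hok [v [Hv Ha]]]. apply hgraph_restrict. split.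
  - eapply defined_upto_prefix; eauto.
  - exists v. split; auto. rewrite H2; congruence.
Qed.

Lemma restrict_chain (c : nat -> H A X) : chain c -> chain (fun n => restrict M (c n)).
Proof. intros Hc n. apply restrict_mono, Hc. Qed.

Lemma restrict_supH (c : nat -> H A X) : chain c ->
  restrict M (supH c) = supH (fun n => restrict M (c n)).
Proof.
  intro Hc. symmetry. apply supH_char; [apply restrict_chain; auto | |].
  - intros t a. rewrite hgraph_restrict. split.
    + intros [Hok [v [Hv Ha]]]. apply hgraph_supH in Hv as [n Hn]; auto.
      exists n. apply hgraph_restrict. split; [|exists v; split; auto].
      intros s Hs. destruct (Hok s Hs) as [v' [a' [Hv' Ha']]]. exists v', a'. split; auto.
      assert (hgraph (c n) s <> None) by (apply hgraph_down with t; try lra; congruence).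
      rewrite <- Hv'. symmetry. apply (Hle_prefix (supH_ub n Hc)); auto.
    + intros [n Hn]. apply hgraph_restrict in Hn as [Hok [v [Hv Ha]]].
      pose proof (Hle_prefix (supH_ub n Hc)) as Hp.
      split; [eapply defined_upto_prefix; eauto | exists v; split; auto; rewrite Hp; congruence].
  - intros z. rewrite hend_restrict. split.
    + intros [H1 H2]. pose proof H1 as H1'. apply hend_supH in H1' as [n Hn]; auto. exists n.
      rewrite <- (supH_terminated n Hc) by congruence. apply hend_restrict; auto.
    + intros [n Hn]. apply hend_restrict in Hn as [H1 H2].
      rewrite (supH_terminated n Hc) by congruence. auto.
Qed.

End Restrict.

Lemma restrict_inl_id A X (p : H A X) : restrict (@inl A unit) p = p.
Proof.
  assert (Hok : forall t, hgraph p t <> None -> defined_upto inl (hgraph p) t).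
  { intros t Ht s Hs. destruct (hgraph p s) as [v|] eqn:E; [exists v, v; auto|].
    exfalso. apply (hgraph_down p (proj1 Hs) (proj2 Hs)); congruence. }
  apply H_char.
  - intros t a. rewrite hgraph_restrict. split.
    + intros [_ [v [Hv Ha]]]. injection Ha as ->. auto.
    + intro H. split; [apply Hok; congruence | exists a; auto].
  - intros z. rewrite hend_restrict. split; [tauto|]. intro H; split; auto.
    destruct z as [d x]. intros t Ht. apply Hok, (hend_segment H). exact Ht.
Qed.

Lemma restrict_pmap_le A S X (M M' : A -> S + unit) (p : H A X) :
  pmap_le M M' -> Hle (restrict M p) (restrict M' p).
Proof.
  intro HM. rewrite Hle_iff. destruct (hend (restrict M p)) as [[d x]|] eqn:E.
  - left. pose proof E as E'. apply hend_restrict in E' as [Ep Hf]. simpl in Hf.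
    apply H_char.
    + intros t a. rewrite !hgraph_restrict. split.
      * intros [Hok [v [Hv Ha]]]. split; [eapply defined_upto_pmap_le; eauto | eauto].
      * intros [Hok [v [Hv Ha]]].
        assert (Ht : 0 <= t < d) by (apply (hend_segment Ep); congruence).
        destruct (Hf t Ht t) as [v' [a' [Hv' Ha']]]; [lra|].
        replace v' with v in * by congruence. rewrite (HM _ _ Ha') in Ha. injection Ha as <-.
        split; [apply Hf | exists v]; auto.
    + intros z. rewrite E, hend_restrict. split.
      * intro H. injection H as <-. split; auto.
        intros t Ht. eapply defined_upto_pmap_le; [eauto | apply Hf, Ht].
      * intros [H _]. congruence.
  - right. split; auto. intros t Ht.
    destruct (hgraph (restrict M p) t) as [a|] eqn:E2; [|congruence].
    apply hgraph_restrict in E2 as [Hok [v [Hv Ha]]]. apply hgraph_restrict.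
    split; [eapply defined_upto_pmap_le; eauto | eauto].
Qed.

Section RestrictBind.
Context {A S X Y : Type} (M : A -> S + unit) (k : X -> H A Y).

Lemma restrict_bindH_total p d x : hend p = Some (d, x) ->
  (forall t, 0 <= t < d -> defined_upto M (hgraph p) t) ->
  restrict M (bindH k p) = bindH (fun x => restrict M (k x)) (restrict M p).
Proof.
  intros E Hf.
  assert (Et : hend (restrict M p) = Some (d, x)) by (apply hend_restrict; auto).
  assert (Hd : 0 <= d) by apply (proj1 (hend_segment E)).
  assert (Hok : forall t, defined_upto M (hgraph (bindH k p)) t <->
            (t < d -> defined_upto M (hgraph p) t) /\
            (d <= t -> defined_upto M (hgraph (k x)) (t - d)))
    by (intro t; rewrite hgraph_bindH, E; apply defined_upto_gcat; auto).
  apply H_char.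
  - intros t a. rewrite hgraph_restrict, Hok, hgraph_bindH_Some, Et, !hgraph_restrict.
    setoid_rewrite hgraph_bindH_Some. rewrite E.
    destruct (Rlt_dec t d) as [Ht|Ht]; split.
    + intros [[H1 _] [v [[[_ Hv]|[Hc _]] Ha]]]; [left; split; [|split]; eauto | lra].
    + intros [[_ [Hp [v [Hv Ha]]]]|[Hc _]]; [|lra].
      split; [split; intro; [auto | lra] | exists v; split; [left|]; auto].
    + intros [[_ H2] [v [[[Hc _]|[_ Hv]] Ha]]]; [lra|].
      right. split; [|split]; [lra | apply H2; lra | eauto].
    + intros [[Hc _]|[Hdt [Hk [v [Hv Ha]]]]]; [lra|].
      split; [split; intro; [lra | auto] | exists v; split; [right|]; auto].
  - intros [r y]. rewrite hend_restrict, !hend_bindH, E, Et, !shift_end_Some, hend_restrict.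
    simpl. setoid_rewrite Hok. split; intros [H1 H2]; split; auto; intros t Ht.
    + pose proof (proj1 (hend_segment H1)). replace t with (t + d - d) by ring.
      apply (proj2 (H2 (t + d) ltac:(lra))); lra.
    + split; intro; [apply Hf | apply H2]; lra.
Qed.

Lemma restrict_bindH_partial p d x t0 : hend p = Some (d, x) -> 0 <= t0 < d ->
  ~ defined_upto M (hgraph p) t0 ->
  restrict M (bindH k p) = bindH (fun x => restrict M (k x)) (restrict M p).
Proof.
  intros E Ht0 Hbad.
  assert (Et : hend (restrict M p) = None).
  { destruct (hend (restrict M p)) as [z|] eqn:E2; auto.
    apply hend_restrict in E2 as [E2 Hf]. rewrite E in E2. injection E2 as <-.
    elim Hbad. apply Hf, Ht0. }
  assert (Hagree : forall s, s < d -> hgraph (bindH k p) s = hgraph p s).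
  { intros s Hs. rewrite hgraph_bindH, E. unfold gcat. destruct (Rlt_dec s d); [auto | lra]. }
  assert (Hbefore : forall g t, (forall s, 0 <= s <= t0 -> g s = hgraph p s) -> t0 <= t ->
                      ~ defined_upto M g t).
  { intros g t Hg Ht Hok. apply Hbad. apply defined_upto_agree with g; [exact Hg|].
    apply (defined_upto_le Hok). lra. }
  assert (Hg : forall s, 0 <= s <= t0 -> hgraph (bindH k p) s = hgraph p s)
    by (intros; apply Hagree; lra).
  apply H_char.
  - intros t a. rewrite (proj1 (bindH_unterminated _ _ Et)), !hgraph_restrict.
    destruct (Rlt_dec t t0) as [Ht|Ht].
    + rewrite (Hagree t) by lra. split; intros [Hok Hv]; split; auto.
      * apply defined_upto_agree with (hgraph (bindH k p)); [intros; apply Hg; lra | exact Hok].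
      * apply defined_upto_agree with (hgraph p); [intros; symmetry; apply Hg; lra | exact Hok].
    + split; intros [Hok _]; exfalso.
      * apply (Hbefore _ t Hg); auto. lra.
      * apply (Hbefore _ t (fun _ _ => eq_refl)); auto. lra.
  - intros [r y]. rewrite (proj2 (bindH_unterminated _ _ Et)). split; [|discriminate].
    intro H. apply hend_restrict in H as [H1 H2]. rewrite hend_bindH, E, shift_end_Some in H1.
    pose proof (proj1 (hend_segment H1)). simpl in H2.
    exfalso. apply (Hbefore _ t0 Hg); [lra | apply H2; lra].
Qed.

Lemma restrict_bindH p :
  restrict M (bindH k p) = bindH (fun x => restrict M (k x)) (restrict M p).
Proof.
  destruct (hend p) as [[d x]|] eqn:E.
  - destruct (classic (forall t, 0 <= t < d -> defined_upto M (hgraph p) t)) as [Hf|Hnf].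
    + eapply restrict_bindH_total; eauto.
    + apply not_all_ex_not in Hnf as [t0 Ht0]. apply imply_to_and in Ht0 as [Ht0 Hbad].
      eapply restrict_bindH_partial; eauto.
  - assert (Et : hend (restrict M p) = None) by (apply restrict_unterminated; auto).
    apply H_ext.
    + rewrite (proj1 (bindH_unterminated _ _ Et)). unfold restrict.
      rewrite !hgraph_tau, !hgraph_mapH, (proj1 (bindH_unterminated _ _ E)). auto.
    + rewrite (proj2 (bindH_unterminated _ _ Et)).
      apply restrict_unterminated, bindH_unterminated; auto.
Qed.

End RestrictBind.

Lemma defined_upto_pmap_comp A B S (N : B -> S + unit) (M : A -> B + unit) g t :
  defined_upto (pmap_comp N M) g t -> defined_upto M g t.
Proof.
  intros H s Hs. destruct (H s Hs) as [v [a [Hv Ha]]]. unfold pmap_comp in Ha.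
  destruct (M v) as [b|] eqn:Em; [exists v, b; split; auto | discriminate].
Qed.

Lemma defined_upto_restrict A B S X (N : B -> S + unit) (M : A -> B + unit) (p : H A X) t :
  defined_upto N (hgraph (restrict M p)) t <-> defined_upto (pmap_comp N M) (hgraph p) t.
Proof.
  split; intros H s Hs.
  - destruct (H s Hs) as [b [a [Hb Ha]]]. apply hgraph_restrict in Hb as [_ [v [Hv Hm]]].
    exists v, a. split; auto. unfold pmap_comp; rewrite Hm; auto.
  - destruct (H s Hs) as [v [a [Hv Ha]]]. unfold pmap_comp in Ha.
    destruct (M v) as [b|] eqn:Em; [|discriminate]. exists b, a. split; auto.
    apply hgraph_restrict. split; [|exists v; auto].
    apply (defined_upto_pmap_comp (N := N)), (defined_upto_le H). lra.
Qed.

Lemma restrict_restrict A B S X (N : B -> S + unit) (M : A -> B + unit) (p : H A X) :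
  restrict N (restrict M p) = restrict (pmap_comp N M) p.
Proof.
  apply H_char.
  - intros t a. rewrite !hgraph_restrict, defined_upto_restrict. split.
    + intros [Hok [b [Hb Ha]]]. apply hgraph_restrict in Hb as [_ [v [Hv Hm]]].
      split; auto. exists v; split; auto. unfold pmap_comp; rewrite Hm; auto.
    + intros [Hok [v [Hv Ha]]]. unfold pmap_comp in Ha.
      destruct (M v) as [b|] eqn:Em; [|discriminate]. split; auto. exists b. split; auto.
      apply hgraph_restrict. split; [eapply defined_upto_pmap_comp; eauto | exists v; auto].
  - intros z. rewrite !hend_restrict. setoid_rewrite defined_upto_restrict. split.
    + intros [[H1 _] H2]. auto.
    + intros [H1 H2]. repeat split; auto. intros. eapply defined_upto_pmap_comp, H2; auto.
Qed.

Lemma defined_upto_mapH A B S X (M : B -> S + unit) (k : A -> B) (p : H A X) t :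
  defined_upto M (hgraph (mapH k p)) t <-> defined_upto (fun v => M (k v)) (hgraph p) t.
Proof.
  rewrite hgraph_mapH. split; intros H s Hs.
  - destruct (H s Hs) as [b [a [Hb Ha]]].
    destruct (hgraph p s) as [v|]; simpl in Hb; [|discriminate]. injection Hb as <-. eauto.
  - destruct (H s Hs) as [v [a [Hv Ha]]]. rewrite Hv. exists (k v), a; auto.
Qed.

Lemma restrict_mapH A B S X (M : B -> S + unit) (k : A -> B) (p : H A X) :
  restrict M (mapH k p) = restrict (fun v => M (k v)) p.
Proof.
  apply H_char.
  - intros t a. rewrite !hgraph_restrict, defined_upto_mapH, hgraph_mapH. split.
    + intros [Hok [b [Hb Ha]]]. split; auto.
      destruct (hgraph p t) as [v|]; simpl in Hb; [|discriminate]. injection Hb as <-. eauto.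
    + intros [Hok [v [Hv Ha]]]. split; auto. rewrite Hv. simpl. eauto.
  - intros z. rewrite !hend_restrict, hend_mapH. setoid_rewrite defined_upto_mapH. tauto.
Qed.

Lemma iotaH_char A X (p : H A X) :
  iotaH p =
  match hgraph p 0 with
  | Some a => inr (inl a)
  | None => match hend p with Some (_, x) => inl x | None => inr (inr tt) end
  end.
Proof. destruct p as [[m x]|e]; reflexivity. Qed.

Lemma hend_duration_zero A X (p : H A X) d x : hend p = Some (d, x) -> hgraph p 0 = None -> d = 0.
Proof.
  intros E H0. destruct (hend_segment E) as [Hd W]. destruct (Rlt_dec 0 d); [|lra].
  exfalso. apply (proj2 (W 0)); auto. lra.
Qed.

Lemma hend_duration_pos A X (p : H A X) d x : hend p = Some (d, x) -> hgraph p 0 <> None -> 0 < d.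
Proof. intros E H0. apply (hend_segment E) in H0. lra. Qed.

Arguments hend_duration_zero {A X p d x} _ _.
Arguments hend_duration_pos {A X p d x} _ _.

Lemma iotaH_bindH A X Y (k : X -> H A Y) (p : H A X) :
  iotaH (bindH k p) = match iotaH p with inl x => iotaH (k x) | inr z => inr z end.
Proof.
  rewrite !iotaH_char, hgraph_bindH, hend_bindH.
  destruct (hend p) as [[d x]|] eqn:E; [|destruct (hgraph p 0); auto].
  unfold gcat. destruct (hgraph p 0) as [a|] eqn:E0.
  - pose proof (hend_duration_pos E ltac:(congruence)).
    destruct (Rlt_dec 0 d); [auto | lra].
  - pose proof (hend_duration_zero E E0) as ->.
    destruct (Rlt_dec 0 0); [lra|]. rewrite Rminus_0_r, iotaH_char.
    destruct (hgraph (k x) 0); auto. destruct (hend (k x)) as [[d' y]|]; simpl; auto.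
Qed.

Lemma restrict_at0_None A S X (M : A -> S + unit) (p : H A X) :
  match hgraph p 0 with Some v => M v = inr tt | None => True end ->
  hgraph (restrict M p) 0 = None.
Proof.
  intro H. destruct (hgraph (restrict M p) 0) as [a|] eqn:E; auto.
  apply hgraph_restrict in E as [_ [v [Hv Ha]]]. rewrite Hv in H. congruence.
Qed.

Lemma iotaH_restrict A S X (M : A -> S + unit) (p : H A X) :
  iotaH (restrict M p) =
  match iotaH p with
  | inl x => inl x
  | inr (inl v) => match M v with inl a => inr (inl a) | inr u => inr (inr u) end
  | inr (inr u) => inr (inr u)
  end.
Proof.
  rewrite !iotaH_char. destruct (hgraph p 0) as [v|] eqn:E0.
  - destruct (M v) as [a|[]] eqn:Em.
    + rewrite (proj2 (hgraph_restrict M p 0 a)); auto.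
      split; [|exists v; auto]. intros s Hs. replace s with 0 by lra. exists v, a; auto.
    + rewrite restrict_at0_None by (rewrite E0; auto).
      destruct (hend (restrict M p)) as [[d x]|] eqn:Et; auto.
      apply hend_restrict in Et as [Ep Hf]. simpl in Hf.
      pose proof (hend_duration_pos Ep ltac:(congruence)).
      destruct (Hf 0 ltac:(lra) 0 ltac:(lra)) as [v' [a' [Hv' Ha']]]. congruence.
  - rewrite restrict_at0_None by (rewrite E0; auto).
    destruct (hend p) as [[d x]|] eqn:Ep; [|rewrite restrict_unterminated; auto].
    pose proof (hend_duration_zero Ep E0) as ->.
    rewrite (proj2 (hend_restrict M p (0, x))); auto. split; auto. simpl; intros; lra.
Qed.

(** * The monad [S ↦ H_S S] *)

Definition iotaK {X S} (f : X -> Tm S) : X -> S + unit := fun x => iota' (f x).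

Lemma bindT_restrict X S (f : X -> Tm S) (p : Tm X) : bindT f p = bindH f (restrict (iotaK f) p).
Proof. reflexivity. Qed.

Lemma iota'_char S (p : Tm S) :
  iota' p =
  match hgraph p 0 with
  | Some s => inl s
  | None => match hend p with Some (_, x) => inl x | None => inr tt end
  end.
Proof.
  unfold iota'. rewrite iotaH_char. destruct (hgraph p 0); simpl; auto.
  destruct (hend p) as [[d x]|]; simpl; auto.
Qed.

Lemma iota'_restrict A S (M : A -> S + unit) (p : H A S) :
  iota' (restrict M p) =
  match iotaH p with inl s => inl s | inr (inl v) => M v | inr (inr u) => inr u end.
Proof.
  unfold iota' at 1. rewrite iotaH_restrict.
  destruct (iotaH p) as [s|[v|u]]; simpl; auto. destruct (M v); auto.
Qed.

Lemma iota'_bindH S X (g : X -> Tm S) (r : H S X) :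
  iota' (bindH g r) =
  match iotaH r with inl y => iota' (g y) | inr (inl s) => inl s | inr (inr u) => inr u end.
Proof. unfold iota' at 1. rewrite iotaH_bindH. destruct (iotaH r) as [y|[s|u]]; auto. Qed.

Lemma iota'_bindT X S (g : X -> Tm S) (q : Tm X) :
  iota' (bindT g q) = match iota' q with inl y => iota' (g y) | inr u => inr u end.
Proof.
  rewrite bindT_restrict, iota'_bindH, iotaH_restrict.
  change (iota' q) with (copair inl (fun z : X + unit => z) (iotaH q)).
  unfold iotaK. destruct (iotaH q) as [y|[v|u]]; simpl; auto. destruct (iota' (g v)); auto.
Qed.

Lemma bindT_etaT_l X S (f : X -> Tm S) (x : X) : bindT f (etaT x) = f x.
Proof. rewrite bindT_restrict. unfold etaT. rewrite restrict_etaH. apply bindH_etaH_l. Qed.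

Lemma bindT_etaT_r X (p : Tm X) : bindT (@etaT X) p = p.
Proof.
  rewrite bindT_restrict. change (iotaK (@etaT X)) with (@inl X unit).
  rewrite restrict_inl_id. apply bindH_etaH_r.
Qed.

Lemma bindT_assoc X Y Z (f : X -> Tm Y) (g : Y -> Tm Z) (p : Tm X) :
  bindT g (bindT f p) = bindT (fun x => bindT g (f x)) p.
Proof.
  rewrite !bindT_restrict, restrict_bindH, bindH_assoc, restrict_restrict.
  replace (pmap_comp (iotaK g) (iotaK f)) with (iotaK (fun x => bindT g (f x))); [reflexivity|].
  apply functional_extensionality; intro x. unfold pmap_comp, iotaK. apply iota'_bindT.
Qed.

Lemma iota'_mono S (p q : Tm S) a : Hle p q -> iota' p = inl a -> iota' q = inl a.
Proof.
  rewrite Hle_iff. intros [<-|[H1 H2]]; auto. rewrite !iota'_char, H1.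
  destruct (hgraph p 0) as [s|] eqn:E; [|discriminate]. rewrite H2; [rewrite E; auto | congruence].
Qed.

Lemma bindT_mono X S (f g : X -> Tm S) p q : (forall a, Hle (f a) (g a)) -> Hle p q ->
  Hle (bindT f p) (bindT g q).
Proof.
  intros Hfg Hpq. rewrite !bindT_restrict. apply bindH_mono; auto.
  eapply Hle_trans; [apply restrict_mono, Hpq | apply restrict_pmap_le].
  intros v a. apply iota'_mono, Hfg.
Qed.

Lemma bindT_chain X S (k : X -> Tm S) (c : nat -> Tm X) : chain c -> chain (fun n => bindT k (c n)).
Proof. intros Hc n. apply bindT_mono; [intro; apply Hle_refl | apply Hc]. Qed.

Lemma bindT_supH X S (g : X -> Tm S) (c : nat -> Tm X) : chain c ->
  bindT g (supH c) = supH (fun n => bindT g (c n)).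
Proof.
  intro Hc. rewrite bindT_restrict, restrict_supH, bindH_supH_r; auto. apply restrict_chain, Hc.
Qed.

Lemma bindT_botH X S (g : X -> Tm S) : bindT g botH = botH.
Proof. rewrite bindT_restrict, restrict_botH. reflexivity. Qed.

(** * The Elgot laws *)

Inductive maybe_reaches {X Y} (F : X -> (Y + X) + unit) : X -> Y -> Prop :=
| reaches_done x y : F x = inl (inl y) -> maybe_reaches F x y
| reaches_step x x' y : F x = inl (inr x') -> maybe_reaches F x' y -> maybe_reaches F x y.

Section MaybeIteration.
Context {X Y : Type} (F : X -> (Y + X) + unit).

Lemma maybe_reaches_unique x y y' : maybe_reaches F x y -> maybe_reaches F x y' -> y = y'.
Proof.
  intro H. revert y'.
  induction H as [x y H|x x' y H HM IH]; intros y' H';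
    inversion H' as [? ? H1|? x'' ? H1 H2]; subst;
    rewrite H in H1; try discriminate; injection H1 as ->; auto.
Qed.

Lemma maybe_step_iter_done n y : Nat.iter n (maybe_step F) (inl (inl y)) = inl (inl y).
Proof. induction n; simpl; auto. rewrite IHn; auto. Qed.

Lemma maybe_step_iter_undef n : Nat.iter n (maybe_step F) (inr tt) = inr tt.
Proof. induction n; simpl; auto. rewrite IHn; auto. Qed.

Lemma maybe_step_iter_reaches n x y :
  Nat.iter n (maybe_step F) (inl (inr x)) = inl (inl y) -> maybe_reaches F x y.
Proof.
  revert x. induction n; intros x H; simpl in H; [discriminate|].
  rewrite <- Nat.iter_succ, Nat.iter_succ_r in H. simpl in H.
  destruct (F x) as [[y'|x']|[]] eqn:E.
  - rewrite maybe_step_iter_done in H. injection H as ->. apply reaches_done; auto.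
  - apply reaches_step with x'; auto.
  - rewrite maybe_step_iter_undef in H. discriminate.
Qed.

Lemma maybe_reaches_step_iter x y : maybe_reaches F x y ->
  exists n, Nat.iter n (maybe_step F) (inl (inr x)) = inl (inl y).
Proof.
  induction 1 as [x y H|x x' y H _ [n Hn]].
  - exists 1%nat. simpl. rewrite H. auto.
  - exists (S n). rewrite Nat.iter_succ_r. simpl. rewrite H. auto.
Qed.

Lemma maybe_iter_reaches x y : maybe_iter F x = inl y <-> maybe_reaches F x y.
Proof.
  unfold maybe_iter. destruct (excluded_middle_informative _) as [Hx|Hx].
  - destruct (constructive_indefinite_description _ Hx) as [y0 [n Hn]]; simpl.
    apply maybe_step_iter_reaches in Hn. split.
    + intro H. injection H as <-. auto.
    + intro H. f_equal. eapply maybe_reaches_unique; eauto.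
  - split; [discriminate|]. intro H. elim Hx. exists y. apply maybe_reaches_step_iter; auto.
Qed.

End MaybeIteration.

Lemma iotaH_supH S X (c : nat -> H S X) : chain c -> exists n, iotaH (supH c) = iotaH (c n).
Proof.
  intro Hc. rewrite iotaH_char. destruct (hgraph (supH c) 0) as [a|] eqn:E.
  - apply hgraph_supH in E as [n Hn]; auto. exists n. rewrite iotaH_char, Hn. auto.
  - assert (Hn0 : forall n, hgraph (c n) 0 = None).
    { intro n. destruct (hgraph (c n) 0) as [a|] eqn:E2; auto.
      rewrite (proj2 (hgraph_supH Hc 0 a)) in E; [discriminate | eauto]. }
    destruct (hend (supH c)) as [[d x]|] eqn:E2.
    + apply hend_supH in E2 as [n Hn]; auto. exists n. rewrite iotaH_char, Hn0, Hn. auto.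
    + exists 0%nat. rewrite iotaH_char, Hn0. destruct (hend (c 0%nat)) as [z|] eqn:E3; auto.
      rewrite (proj2 (hend_supH Hc z)) in E2; [discriminate | eauto].
Qed.

Definition iterT_pmap {X S} (f : X -> Tm (S + X)) : S + X -> S + unit :=
  copair (@inl S unit) (maybe_iter (iotaK f)).

Definition iterT_step {X S} (f : X -> Tm (S + X)) (k : X -> Tm S) : X -> Tm S :=
  fun x => bindT (copair (@etaT S) k) (f x).

Lemma iterT_restrict X S (f : X -> Tm (S + X)) x :
  iterT f x = restrict (iterT_pmap f) (iterH f x).
Proof. reflexivity. Qed.

Lemma iotaH_iterH_step S X Y (f : X -> H S (Y + X)) (k : X -> H S Y) x :
  iotaH (iterH_step f k x) =
  match iotaH (f x) with inl (inl y) => inl y | inl (inr x') => iotaH (k x') | inr z => inr z end.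
Proof. unfold iterH_step. rewrite iotaH_bindH. destruct (iotaH (f x)) as [[s|x']|z]; auto. Qed.

Section IterT.
Context {X S : Type} (f : X -> Tm (S + X)).

Let resume (j : S + ((S + X) + unit)) : S + unit :=
  match j with inl s => inl s | inr (inl v) => iterT_pmap f v | inr (inr u) => inr u end.

Lemma iotaK_char x : iotaK f x = match iotaH (f x) with inl v => inl v | inr z => z end.
Proof. unfold iotaK, iota'. destruct (iotaH (f x)); auto. Qed.

Lemma iterH_resume_reaches x s : maybe_reaches (iotaK f) x s -> resume (iotaH (iterH f x)) = inl s.
Proof.
  induction 1 as [x s H|x x' s H HM IH];
    rewrite iterH_fix, iotaH_iterH_step; rewrite iotaK_char in H;
    destruct (iotaH (f x)) as [[s'|x'']|[v|u]]; simpl in *; try discriminate;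
    injection H as ->; auto.
  simpl. apply maybe_iter_reaches; auto.
Qed.

Lemma resume_iterH_reaches x s : resume (iotaH (iterH f x)) = inl s -> maybe_reaches (iotaK f) x s.
Proof.
  rewrite iterH_kleene. destruct (iotaH_supH (iterH_approx_chain f x)) as [n ->].
  revert x. induction n; intros x H; simpl in H; [discriminate|].
  simpl in H. rewrite iotaH_iterH_step in H.
  destruct (iotaH (f x)) as [[s'|x']|[[s'|x']|u]] eqn:E; simpl in H; try discriminate.
  - injection H as ->. apply reaches_done. rewrite iotaK_char, E. auto.
  - apply reaches_step with x'; [rewrite iotaK_char, E | apply IHn]; auto.
  - injection H as ->. apply reaches_done. rewrite iotaK_char, E. auto.
  - apply maybe_iter_reaches in H. apply reaches_step with x'; auto. rewrite iotaK_char, E; auto.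
Qed.

Lemma iota'_iterT x : iota' (iterT f x) = maybe_iter (iotaK f) x.
Proof.
  rewrite iterT_restrict, iota'_restrict.
  change (resume (iotaH (iterH f x)) = maybe_iter (iotaK f) x).
  destruct (maybe_iter (iotaK f) x) as [s|[]] eqn:E.
  - apply maybe_iter_reaches in E. apply iterH_resume_reaches; auto.
  - destruct (resume (iotaH (iterH f x))) as [s|[]] eqn:E2; auto.
    apply resume_iterH_reaches, maybe_iter_reaches in E2. congruence.
Qed.

Lemma iterT_fix x : iterT f x = iterT_step f (iterT f) x.
Proof.
  rewrite iterT_restrict, iterH_fix. unfold iterH_step, iterT_step.
  rewrite restrict_bindH, bindT_restrict.
  replace (fun v => restrict (iterT_pmap f) (copair (@etaH (S + X) S) (iterH f) v))
    with (copair (@etaT S) (iterT f))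
    by (apply functional_extensionality;
        intros [s|x']; [symmetry; apply restrict_etaH | reflexivity]).
  replace (iotaK (copair (@etaT S) (iterT f))) with (iterT_pmap f); [reflexivity|].
  apply functional_extensionality; intros [s|x']; [reflexivity|]. symmetry. apply iota'_iterT.
Qed.

Lemma iterT_least (a : X -> Tm S) : (forall x, Hle (iterT_step f a x) (a x)) ->
  forall x, Hle (iterT f x) (a x).
Proof.
  intros Ha.
  assert (Hreach : forall x s, maybe_reaches (iotaK f) x s -> iota' (a x) = inl s).
  { induction 1 as [x s H|x x' s H HM IH]; apply (iota'_mono (Ha x));
      unfold iterT_step; rewrite iota'_bindT; fold (iotaK f x); rewrite H; auto. }
  intro x. rewrite iterT_restrict, iterH_kleene, restrict_supH by apply iterH_approx_chain.
  apply supH_least; [apply restrict_chain, iterH_approx_chain|].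
  intro n. revert x. induction n; intro x; [simpl; rewrite restrict_botH; apply botH_le|].
  simpl. unfold iterH_step. rewrite restrict_bindH. eapply Hle_trans; [|apply Ha].
  unfold iterT_step. rewrite bindT_restrict. apply bindH_mono.
  - apply restrict_pmap_le. intros [s|x'] b Hb; [exact Hb|].
    apply Hreach, maybe_iter_reaches, Hb.
  - intros [s|x']; simpl; [rewrite restrict_etaH; apply Hle_refl | apply IHn].
Qed.

End IterT.

Section Naturality.
Context {X Y Z : Type} (f : X -> Tm (Y + X)) (g : Y -> Tm Z).

Definition nat_body : X -> Tm (Z + X) := fun x =>
  bindT (copair (fun y => bindT (fun z => etaT (@inl Z X z)) (g y)) (fun x' => etaT (@inr Z X x')))
    (f x).

Lemma iterT_step_nat_body (k : X -> Tm Z) x : iterT_step nat_body k x = bindT (copair g k) (f x).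
Proof.
  unfold iterT_step, nat_body. rewrite bindT_assoc. f_equal.
  apply functional_extensionality; intros [y|x']; simpl; [|apply bindT_etaT_l].
  rewrite bindT_assoc. rewrite <- (bindT_etaT_r (g y)) at 2. f_equal.
  apply functional_extensionality; intro z. apply bindT_etaT_l.
Qed.

Lemma iterT_nat_body_le x : Hle (iterT nat_body x) (bindT g (iterT f x)).
Proof.
  revert x. apply iterT_least. intro x.
  rewrite iterT_step_nat_body, (iterT_fix f x). unfold iterT_step. rewrite bindT_assoc.
  replace (fun v => bindT g (copair (@etaT Y) (iterT f) v))
    with (copair g (fun x' => bindT g (iterT f x'))); [apply Hle_refl|].
  apply functional_extensionality; intros [y|x']; simpl; auto. rewrite bindT_etaT_l; auto.
Qed.

Lemma nat_body_reaches x s b : maybe_reaches (iotaK f) x s -> iota' (g s) = inl b ->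
  maybe_reaches (iotaK nat_body) x b.
Proof.
  induction 1 as [x s H|x x' s H HM IH]; intro Hb.
  - apply reaches_done. unfold iotaK, nat_body. rewrite iota'_bindT. fold (iotaK f x).
    rewrite H. simpl. rewrite iota'_bindT, Hb. reflexivity.
  - apply reaches_step with x'; auto. unfold iotaK, nat_body. rewrite iota'_bindT.
    fold (iotaK f x). rewrite H. reflexivity.
Qed.

Lemma bindT_iterT_le x : Hle (bindT g (iterT f x)) (iterT nat_body x).
Proof.
  rewrite iterT_restrict, iterH_kleene, restrict_supH, bindT_supH
    by (try apply restrict_chain; apply iterH_approx_chain).
  apply supH_least; [apply bindT_chain, restrict_chain, iterH_approx_chain|].
  intro n. revert x. induction n; intro x; simpl.
  - rewrite restrict_botH, bindT_botH. apply botH_le.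
  - unfold iterH_step.
    rewrite restrict_bindH, bindT_restrict, restrict_bindH, bindH_assoc, restrict_restrict.
    rewrite (iterT_fix nat_body x), iterT_step_nat_body, bindT_restrict.
    apply bindH_mono.
    + apply restrict_pmap_le. intros [y|x'] b Hb; unfold pmap_comp, iotaK in *; simpl in *; auto.
      rewrite iota'_iterT.
      destruct (maybe_iter (iotaK f) x') as [s|[]] eqn:E; [|discriminate].
      apply maybe_iter_reaches in E. apply maybe_iter_reaches. eapply nat_body_reaches; eauto.
    + intros [y|x']; simpl.
      * rewrite restrict_etaH. change (etaH Y y) with (etaT y).
        rewrite <- bindT_restrict, bindT_etaT_l. apply Hle_refl.
      * rewrite <- bindT_restrict. apply IHn.
Qed.

Lemma bindT_iterT x : bindT g (iterT f x) = iterT nat_body x.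
Proof. apply Hle_antisym; [apply bindT_iterT_le | apply iterT_nat_body_le]. Qed.

End Naturality.

Section Codiagonal.
Context {X Y : Type} (f : X -> Tm ((Y + X) + X)).

Definition codiag_body : X -> Tm (Y + X) := fun x =>
  bindT (fun z => etaT (copair (fun z0 => z0) (@inr Y X) z)) (f x).

Let unfold_twice (k j : X -> Tm Y) : X -> Tm Y :=
  fun x => bindT (copair (copair (@etaT Y) k) j) (f x).

Lemma iterT_step_codiag_body k x : iterT_step codiag_body k x = unfold_twice k k x.
Proof.
  unfold iterT_step, codiag_body, unfold_twice. rewrite bindT_assoc. f_equal.
  apply functional_extensionality; intros [[y|x']|x']; rewrite bindT_etaT_l; reflexivity.
Qed.

Lemma iterT_step_iterT k x :
  iterT_step (iterT f) k x = iterT (nat_body f (copair (@etaT Y) k)) x.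
Proof. apply bindT_iterT. Qed.

Lemma iterT_codiag x : iterT codiag_body x = iterT (iterT f) x.
Proof.
  apply Hle_antisym; revert x; apply iterT_least; intro x.
  - rewrite iterT_step_codiag_body.
    rewrite iterT_fix, iterT_step_iterT, iterT_fix, iterT_step_nat_body.
    replace (iterT (nat_body f (copair (@etaT Y) (iterT (iterT f)))))
      with (iterT (iterT f)); [apply Hle_refl|].
    apply functional_extensionality; intro x'. rewrite <- iterT_step_iterT. apply iterT_fix.
  - rewrite iterT_step_iterT. revert x. apply iterT_least. intro x.
    rewrite iterT_step_nat_body. fold (unfold_twice (iterT codiag_body) (iterT codiag_body) x).
    rewrite <- iterT_step_codiag_body, <- iterT_fix. apply Hle_refl.
Qed.

End Codiagonal.

Section MapH.
Context {A B : Type} (k : A -> B).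

Lemma mapH_bindH X Y (K : X -> H A Y) (p : H A X) :
  mapH k (bindH K p) = bindH (fun v => mapH k (K v)) (mapH k p).
Proof.
  apply H_ext.
  - rewrite hgraph_mapH, !hgraph_bindH, hend_mapH.
    destruct (hend p) as [[d x]|]; rewrite ?hgraph_mapH; auto.
    apply functional_extensionality; intro t. unfold gcat. destruct (Rlt_dec t d); auto.
  - rewrite hend_mapH, !hend_bindH, hend_mapH. destruct (hend p) as [[d x]|]; auto.
    rewrite hend_mapH; auto.
Qed.

Lemma mapH_etaH X (x : X) : mapH k (etaH A x) = etaH B x.
Proof. apply H_ext; [rewrite hgraph_mapH | rewrite hend_mapH]; reflexivity. Qed.

Lemma mapH_botH X : mapH k (botH : H A X) = botH.
Proof. apply H_ext; [rewrite hgraph_mapH | rewrite hend_mapH]; reflexivity. Qed.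

Lemma mapH_mono X (p q : H A X) : Hle p q -> Hle (mapH k p) (mapH k q).
Proof.
  rewrite !Hle_iff. intros [<-|[H1 H2]]; auto. right. rewrite hend_mapH, !hgraph_mapH.
  split; auto. intros t Ht. destruct (hgraph p t) eqn:E; simpl in *; [|congruence].
  rewrite H2; [rewrite E; auto | congruence].
Qed.

Lemma mapH_supH X (c : nat -> H A X) : chain c -> mapH k (supH c) = supH (fun n => mapH k (c n)).
Proof.
  intro Hc. symmetry. apply supH_char; [intro n; apply mapH_mono, Hc | |].
  - intros t v. rewrite hgraph_mapH. split.
    + intro H. destruct (hgraph (supH c) t) as [a|] eqn:E; simpl in H; [|discriminate].
      apply hgraph_supH in E as [n Hn]; auto. exists n. rewrite hgraph_mapH, Hn; auto.
    + intros [n Hn]. rewrite hgraph_mapH in Hn.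
      destruct (hgraph (c n) t) as [a|] eqn:E; simpl in Hn; [|discriminate].
      rewrite (proj2 (hgraph_supH Hc t a)); eauto.
  - intros z. rewrite hend_mapH, hend_supH by auto.
    split; intros [n Hn]; exists n; rewrite hend_mapH in *; auto.
Qed.

End MapH.

Section Uniformity.
Context {X Y Z : Type} (f : X -> Tm (Y + X)) (g : Z -> Tm (Y + Z)) (h : Z -> X).

Let hsum : Y + Z -> Y + X := copair (@inl Y X) (fun z => inr (h z)).

Hypothesis f_h : forall z, f (h z) = bindT (fun v => etaT (hsum v)) (g z).

Lemma bindT_etaT_mapH (p : Tm (Y + Z)) :
  bindT (fun v => etaT (hsum v)) p = bindH (fun v => etaH (Y + X) (hsum v)) (mapH hsum p).
Proof.
  rewrite bindT_restrict. f_equal.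
  rewrite <- (restrict_inl_id (mapH hsum p)) at 1. rewrite restrict_mapH. reflexivity.
Qed.

Lemma iterH_approx_uniform n z : iterH_approx f n (h z) = mapH hsum (iterH_approx g n z).
Proof.
  revert z. induction n; intro z; simpl; [symmetry; apply mapH_botH|].
  unfold iterH_step. rewrite f_h, bindT_etaT_mapH, bindH_assoc, mapH_bindH. f_equal.
  apply functional_extensionality; intros [y|z'].
  - change (hsum (inl y)) with (@inl Y X y). rewrite bindH_etaH_l. apply eq_sym, mapH_etaH.
  - change (hsum (inr z')) with (@inr Y X (h z')). rewrite bindH_etaH_l. apply IHn.
Qed.

Lemma iotaK_uniform z :
  iotaK f (h z) = match iotaK g z with inl v => inl (hsum v) | inr u => inr u end.
Proof. unfold iotaK. rewrite f_h, iota'_bindT. destruct (iota' (g z)); reflexivity. Qed.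

Lemma reaches_uniform z s : maybe_reaches (iotaK g) z s -> maybe_reaches (iotaK f) (h z) s.
Proof.
  induction 1 as [z s H|z z' s H HM IH].
  - apply reaches_done. rewrite iotaK_uniform, H. reflexivity.
  - apply reaches_step with (h z'); auto. rewrite iotaK_uniform, H. reflexivity.
Qed.

Lemma reaches_uniform_inv z s : maybe_reaches (iotaK f) (h z) s -> maybe_reaches (iotaK g) z s.
Proof.
  remember (h z) as x eqn:Hx. intro H. revert z Hx.
  induction H as [x s H|x x' s H HM IH]; intros z ->; rewrite iotaK_uniform in H;
    destruct (iotaK g z) as [[y|z']|u] eqn:E; simpl in H; try discriminate; injection H as <-.
  - apply reaches_done; auto.
  - apply reaches_step with z'; auto.
Qed.

Lemma iterT_uniform z : iterT f (h z) = iterT g z.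
Proof.
  rewrite !iterT_restrict, !iterH_kleene.
  replace (fun n => iterH_approx f n (h z)) with (fun n => mapH hsum (iterH_approx g n z))
    by (apply functional_extensionality; intro n; symmetry; apply iterH_approx_uniform).
  rewrite <- mapH_supH by apply iterH_approx_chain. rewrite restrict_mapH. f_equal.
  apply functional_extensionality; intros [y|z']; simpl; auto. unfold iterT_pmap. simpl.
  destruct (maybe_iter (iotaK g) z') as [s|[]] eqn:E.
  - apply maybe_iter_reaches in E. apply maybe_iter_reaches, reaches_uniform; auto.
  - destruct (maybe_iter (iotaK f) (h z')) as [s|[]] eqn:E2; auto.
    apply maybe_iter_reaches in E2.
    apply reaches_uniform_inv, maybe_iter_reaches in E2. congruence.
Qed.

End Uniformity.

(** * The hybrid monad *)

Definition close_graph {X} (d : R) (g : R -> option X) (x : X) : R -> option X :=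
  fun t => if Rlt_dec t d then g t else if Req_EM_T t d then Some x else None.

Definition to_HH X (p : Tm X) : HH X :=
  match p with
  | inl (m, x) => mk_conv (mk_traj (close_graph (trj_len m) (tev (proj1_sig m)) x))
  | inr e => inr e
  end.

Definition of_HH X (q : HH X) : Tm X :=
  match q with
  | inl c =>
      match tdur (proj1_sig c) with
      | DClosed d =>
          match tev (proj1_sig c) d with
          | Some x => inl (trj_of (fun t => if Rlt_dec t d then tev (proj1_sig c) t else None), x)
          | None => inr (proj1_sig c)
          end
      | _ => inr (proj1_sig c)
      end
  | inr e => inr e
  end.

Lemma ctraj_ext X (c1 c2 : ctraj X) : proj1_sig c1 = proj1_sig c2 -> c1 = c2.
Proof. destruct c1, c2; simpl; intro; subst; f_equal; apply proof_irrelevance. Qed.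

Lemma mk_conv_closed X (e : traj X) d : tdur e = DClosed d ->
  exists c, mk_conv e = inl c /\ proj1_sig c = e.
Proof.
  intro H. unfold mk_conv, ctraj_fallback.
  destruct (excluded_middle_informative _) as [Hx|Hx]; [eauto | elim Hx; eauto].
Qed.

Lemma close_graph_dom X (g : R -> option X) d x : segment_upto g d ->
  forall t, close_graph d g x t <> None <-> in_dom (DClosed d) t.
Proof.
  intros [Hd W] t. unfold close_graph. simpl. destruct (Rlt_dec t d); [rewrite W; lra|].
  destruct (Req_EM_T t d); split; (congruence || lra).
Qed.

Lemma to_HH_inl X (m : Trj X) x : exists c, to_HH (inl (m, x)) = inl c /\
  tdur (proj1_sig c) = DClosed (trj_len m) /\
  tev (proj1_sig c) = close_graph (trj_len m) (tev (proj1_sig m)) x.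
Proof.
  pose proof (trj_segment m) as W.
  assert (Hok : dur_ok (DClosed (trj_len m))) by apply (proj1 W).
  destruct (mk_traj_spec _ _ Hok (close_graph_dom x W)) as [H1 H2].
  destruct (mk_conv_closed _ H1) as [c [Hc Hc2]]. exists c. simpl. rewrite Hc, Hc2. auto.
Qed.

Lemma of_to_HH X (p : Tm X) : of_HH (to_HH p) = p.
Proof.
  destruct p as [[m x]|e]; [|reflexivity].
  destruct (to_HH_inl m x) as [c [Hc [Hd Hg]]]. rewrite Hc. simpl. rewrite Hd, Hg.
  unfold close_graph at 1. destruct (Rlt_dec (trj_len m) (trj_len m)); [lra|].
  destruct (Req_EM_T (trj_len m) (trj_len m)); [|congruence].
  do 2 f_equal. pose proof (trj_segment m) as W.
  replace (fun t => if Rlt_dec t (trj_len m) then close_graph (trj_len m) (tev (proj1_sig m)) x t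
                    else None) with (tev (proj1_sig m)).
  - apply trj_ext. apply (trj_of_spec W).
  - apply functional_extensionality; intro t. unfold close_graph.
    destruct (Rlt_dec t (trj_len m)); auto. apply (segment_upto_out W). lra.
Qed.

Lemma to_of_HH X (q : HH X) : to_HH (of_HH q) = q.
Proof.
  destruct q as [c|e]; [|reflexivity].
  destruct (proj2_sig c) as [d Hd]. unfold of_HH. rewrite Hd.
  set (e := proj1_sig c) in *.
  pose proof (tev_dom e) as Hdom. rewrite Hd in Hdom. simpl in Hdom.
  pose proof (tdur_ok e) as Hok. rewrite Hd in Hok. simpl in Hok.
  destruct (tev e d) as [x|] eqn:Ex; [|exfalso; apply (proj2 (Hdom d)); auto; lra].
  set (g := fun t => if Rlt_dec t d then tev e t else None).
  assert (W : segment_upto g d).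
  { split; auto. intro t. unfold g.
    destruct (Rlt_dec t d); [rewrite Hdom; lra | split; [congruence | lra]]. }
  destruct (to_HH_inl (trj_of g) x) as [c2 [Hc [_ Hg]]]. rewrite Hc. f_equal. apply ctraj_ext.
  apply traj_ext. rewrite Hg. destruct (trj_of_spec W) as [E1 E2]. rewrite E1, E2.
  apply functional_extensionality; intro t. unfold close_graph, g. destruct (Rlt_dec t d); auto.
  destruct (Req_EM_T t d) as [->|]; auto. destruct (tev e t) eqn:E; auto. exfalso.
  assert (tev e t <> None) as Ht by congruence. apply Hdom in Ht. lra.
Qed.

Lemma to_HH_etaT X (x : X) : to_HH (etaT x) = hret x.
Proof.
  unfold etaT, etaH, hret. simpl. do 2 f_equal. apply functional_extensionality; intro t.
  unfold close_graph. cbn. destruct (Rlt_dec t 0); destruct (Req_EM_T t 0); auto; lra.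
Qed.

Definition hbind_live {X Y} (f' : X -> HH Y) (g : R -> option X) (t : R) : Prop :=
  0 <= t /\ forall s, 0 <= s <= t -> exists x, g s = Some x /\ f' x <> inr (traj_empty Y).

Definition hbind_head {X Y} (f' : X -> HH Y) (g : R -> option X) : R -> option Y :=
  fun t => if decP (hbind_live f' g t)
           then match g t with Some x => tev (HH_traj (f' x)) 0 | None => None end else None.

Definition hbind_graph {X Y} (f' : X -> HH Y) (g : R -> option X) (d : R) (xd : X) :
  R -> option Y :=
  fun t => if Rlt_dec t d
           then match g t with Some x => tev (HH_traj (f' x)) 0 | None => None end
           else tev (HH_traj (f' xd)) (t - d).

Lemma hbind_inr X Y (f' : X -> HH Y) e : hbind f' (inr e) = inr (mk_traj (hbind_head f' (tev e))).
Proof. reflexivity. Qed.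

Lemma hbind_inl X Y (f' : X -> HH Y) (c : ctraj X) d : tdur (proj1_sig c) = DClosed d ->
  hbind f' (inl c) =
  if decP (forall t, hbind_live f' (tev (proj1_sig c)) t <-> in_dom (DClosed d) t)
  then match tev (proj1_sig c) d with
       | Some xd =>
           match f' xd with
           | inl _ => mk_conv (mk_traj (hbind_graph f' (tev (proj1_sig c)) d xd))
           | inr _ => inr (mk_traj (hbind_graph f' (tev (proj1_sig c)) d xd))
           end
       | None => inr (mk_traj (hbind_head f' (tev (proj1_sig c))))
       end
  else inr (mk_traj (hbind_head f' (tev (proj1_sig c)))).
Proof. intro Hd. unfold hbind. simpl. rewrite Hd. reflexivity. Qed.

Lemma close_graph_lt X (g : R -> option X) d x t : t < d -> close_graph d g x t = g t.
Proof. intro H. unfold close_graph. destruct (Rlt_dec t d); [reflexivity | lra]. Qed.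

Lemma close_graph_eq X (g : R -> option X) d x : close_graph d g x d = Some x.
Proof. unfold close_graph. destruct (Rlt_dec d d); [lra|]. destruct (Req_EM_T d d); congruence. Qed.

Lemma close_graph_gt X (g : R -> option X) d x t : d < t -> close_graph d g x t = None.
Proof.
  intro H. unfold close_graph.
  destruct (Rlt_dec t d); [lra|]. destruct (Req_EM_T t d); [lra | auto].
Qed.

Lemma to_HH_terminated Y (q : Tm Y) d y : hend q = Some (d, y) ->
  to_HH q = mk_conv (mk_traj (close_graph d (hgraph q) y)).
Proof.
  destruct q as [[m y']|e]; simpl; intro H; [injection H as <- <-; reflexivity | discriminate].
Qed.

Lemma to_HH_unterminated Y (q : Tm Y) : hend q = None -> to_HH q = inr (H_traj q).
Proof. destruct q as [[m y']|e]; simpl; intro H; [discriminate | reflexivity]. Qed.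

Lemma tev_to_HH Y (q : Tm Y) :
  tev (HH_traj (to_HH q)) =
  match hend q with Some (d, y) => close_graph d (hgraph q) y | None => hgraph q end.
Proof.
  destruct q as [[m y]|e]; [|reflexivity].
  destruct (to_HH_inl m y) as [c [Hc [_ Hg]]]. rewrite Hc. exact Hg.
Qed.

Lemma tev_to_HH_0 Y (q : Tm Y) :
  tev (HH_traj (to_HH q)) 0 = match iota' q with inl a => Some a | inr _ => None end.
Proof.
  rewrite tev_to_HH, iota'_char.
  destruct (hend q) as [[d y]|] eqn:E; [|destruct (hgraph q 0); auto].
  pose proof (hend_segment E) as W. destruct (Rlt_dec 0 d).
  - rewrite close_graph_lt by auto. destruct (hgraph q 0) eqn:E0; auto.
    exfalso. apply (proj2 (proj2 W 0)); [lra | auto].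
  - assert (d = 0) as -> by (destruct W; lra).
    rewrite close_graph_eq, (segment_upto_out W) by lra. auto.
Qed.

Lemma to_HH_empty_iff Y (q : Tm Y) : to_HH q = inr (traj_empty Y) <-> iota' q = inr tt.
Proof.
  rewrite iota'_char. destruct q as [[m y]|e].
  - destruct (to_HH_inl m y) as [c [Hc _]]. rewrite Hc.
    split; [discriminate|]. unfold hgraph; simpl.
    destruct (tev (proj1_sig m) 0); intro H; discriminate.
  - unfold hgraph; simpl. split; [intro H; injection H as ->; reflexivity|].
    intro H. f_equal. apply traj_ext, functional_extensionality; intro t. simpl.
    destruct (tev e 0) eqn:E0; [discriminate|].
    destruct (tev e t) eqn:Et; auto. exfalso.
    assert (0 <= t) by (apply (proj1 (tev_segment e)); congruence).
    apply (proj2 (tev_segment e) 0 t); try lra; congruence.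
Qed.

Lemma to_HH_nonempty Y (q : Tm Y) : to_HH q <> inr (traj_empty Y) <-> exists a, iota' q = inl a.
Proof.
  rewrite to_HH_empty_iff. destruct (iota' q) as [a|[]].
  - split; [eauto | intros _; discriminate].
  - split; [intro H; elim H; reflexivity | intros [b Hb]; discriminate].
Qed.

Section BindIso.
Context {X Y : Type} (f : X -> Tm Y).

Let f' := fun x => to_HH (f x).

Lemma to_HH_start x :
  tev (HH_traj (f' x)) 0 = match iotaK f x with inl a => Some a | inr _ => None end.
Proof. apply tev_to_HH_0. Qed.

Lemma hbind_live_iff g t : hbind_live f' g t <-> 0 <= t /\ defined_upto (iotaK f) g t.
Proof.
  unfold hbind_live. split; intros [H0 H]; split; auto; intros s Hs.
  - destruct (H s Hs) as [v [Hv Hn]]. apply to_HH_nonempty in Hn as [b Hb]. eauto.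
  - destruct (H s Hs) as [v [b [Hv Hb]]]. exists v; split; auto. apply to_HH_nonempty; eauto.
Qed.

Lemma hbind_head_Some g t a :
  hbind_head f' g t = Some a <->
  0 <= t /\ defined_upto (iotaK f) g t /\ exists v, g t = Some v /\ iotaK f v = inl a.
Proof.
  unfold hbind_head. fold f'. unfold decP.
  destruct (excluded_middle_informative _) as [Hx|Hx]; rewrite hbind_live_iff in Hx.
  - split; [|intros [_ [_ [v [-> Ha]]]]; rewrite to_HH_start, Ha; auto].
    intro H. split; [tauto|]. split; [tauto|].
    destruct (g t) as [v|]; [|discriminate]. exists v; split; auto.
    rewrite to_HH_start in H. destruct (iotaK f v); congruence.
  - split; [discriminate | intros [H0 [Hok _]]; elim Hx; auto].
Qed.

Lemma to_HH_bindT_inr e : to_HH (bindT f (inr e)) = hbind f' (to_HH (inr e)).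
Proof.
  set (q := @inr (Trj X * X) (traj X) e).
  assert (E : hbind_head f' (tev e) = hgraph (restrict (iotaK f) q)).
  { apply functional_extensionality; intro t. apply option_eq_iff; intro a.
    rewrite hbind_head_Some, hgraph_restrict. unfold hgraph; simpl. split; [tauto|].
    intros [H1 [v [Hv Ha]]]. split; [|eauto]. apply (proj1 (tev_segment e)). congruence. }
  change (to_HH (bindT f q)) with (@inr (ctraj Y) (traj Y) (H_traj (restrict (iotaK f) q))).
  simpl to_HH. rewrite hbind_inr, E. f_equal. apply traj_ext.
  rewrite tev_mk_traj by apply hgraph_segment. reflexivity.
Qed.

Lemma iota'_undefined Z (q : Tm Z) :
  iota' q = inr tt -> hend q = None /\ forall t, hgraph q t = None.
Proof.
  rewrite iota'_char. destruct (hgraph q 0) eqn:E0; [discriminate|].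
  destruct (hend q) as [[d z]|]; [discriminate|]. intros _. split; auto.
  intro t. destruct (hgraph q t) eqn:Et; auto. exfalso.
  apply (hgraph_down q (s := 0) (t := t)); try congruence; [lra|].
  apply (hgraph_nonneg q). congruence.
Qed.

Section Terminated.
Variables (m : Trj X) (x : X).

Let d := trj_len m.
Let p : Tm X := inl (m, x).
Let G := close_graph d (tev (proj1_sig m)) x.

Lemma hbind_live_closed :
  (forall t, hbind_live f' G t <-> in_dom (DClosed d) t) <-> defined_upto (iotaK f) G d.
Proof.
  assert (Hd : 0 <= d) by apply (proj1 (trj_segment m)).
  setoid_rewrite hbind_live_iff. simpl. split.
  - intro H. refine (proj2 (proj2 (H d) _)). lra.
  - intros H t. split.
    + intros [H0 Hok]. split; auto. destruct (Rle_dec t d) as [|Hgt]; auto. exfalso.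
      destruct (Hok t) as [v [a [Hv _]]]; [lra|].
      unfold G in Hv. rewrite close_graph_gt in Hv; [discriminate | lra].
    + intros Ht. split; [lra|]. apply (defined_upto_le H). lra.
Qed.

Lemma defined_upto_close_lt t : t < d ->
  defined_upto (iotaK f) G t <-> defined_upto (iotaK f) (hgraph p) t.
Proof.
  intro Ht.
  split; apply defined_upto_agree; intros s Hs; unfold G; rewrite close_graph_lt by lra; auto.
Qed.

Lemma hend_restrict_total : defined_upto (iotaK f) G d -> hend (restrict (iotaK f) p) = Some (d, x).
Proof.
  intro Hf. apply hend_restrict. split; [reflexivity|]. intros t Ht. simpl in Ht.
  apply (defined_upto_close_lt (proj2 Ht)), (defined_upto_le Hf). fold d. lra.
Qed.

Lemma hbind_graph_before : defined_upto (iotaK f) G d ->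
  forall t, t < d -> hbind_graph f' G d x t = hgraph (restrict (iotaK f) p) t.
Proof.
  intros Hf t Ht. unfold hbind_graph. destruct (Rlt_dec t d); [|lra].
  unfold G. rewrite close_graph_lt by auto. change (tev (proj1_sig m) t) with (hgraph p t).
  apply option_eq_iff; intro a. rewrite hgraph_restrict. split.
  - destruct (hgraph p t) as [v|] eqn:Ev; [|discriminate].
    rewrite to_HH_start.
    destruct (iotaK f v) as [b|] eqn:Eb; [|discriminate]. intro H; injection H as <-.
    split; [|eauto]. apply (defined_upto_close_lt Ht), (defined_upto_le Hf). lra.
  - intros [_ [v [-> Ha]]]. rewrite to_HH_start, Ha. auto.
Qed.

Lemma to_HH_bindT_total : defined_upto (iotaK f) G d -> to_HH (bindT f p) = hbind f' (to_HH p).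
Proof.
  intro Hf. pose proof (hend_restrict_total Hf) as Et.
  pose proof (hbind_graph_before Hf) as Hbefore.
  destruct (to_HH_inl m x) as [c [Hc [Hd Hg]]]. fold d in Hd, Hg. fold G in Hg.
  assert (Gd : G d = Some x) by apply close_graph_eq.
  unfold p at 2. rewrite Hc, (hbind_inl _ _ Hd), Hg, Gd.
  rewrite decP_true by (apply hbind_live_closed; exact Hf).
  rewrite bindT_restrict. destruct (f x) as [[m' y]|e'] eqn:Efx.
  - destruct (to_HH_inl m' y) as [c' [Hc' _]]. unfold f' at 1. rewrite Efx, Hc'.
    rewrite (@to_HH_terminated _ _ (d + trj_len m') y)
      by (rewrite hend_bindH, Et, Efx; reflexivity).
    do 2 f_equal. apply functional_extensionality; intro t.
    rewrite hgraph_bindH, Et, Efx. destruct (Rlt_dec t d) as [Hlt|Hlt].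
    + pose proof (proj1 (trj_segment m')). rewrite close_graph_lt by lra.
      unfold gcat. destruct (Rlt_dec t d); [|lra]. symmetry. apply Hbefore, Hlt.
    + unfold hbind_graph. destruct (Rlt_dec t d); [lra|]. unfold f'. rewrite Efx.
      rewrite tev_to_HH. simpl.
      unfold close_graph, gcat, hgraph. simpl.
      destruct (Rlt_dec t (d + trj_len m')), (Rlt_dec (t - d) (trj_len m')), (Rlt_dec t d);
        try lra; auto.
      destruct (Req_EM_T t (d + trj_len m')), (Req_EM_T (t - d) (trj_len m')); auto; lra.
  - unfold f' at 1. rewrite Efx. simpl to_HH.
    rewrite to_HH_unterminated by (rewrite hend_bindH, Et, Efx; reflexivity).
    assert (E : hbind_graph f' G d x = hgraph (bindH f (restrict (iotaK f) p))).
    { apply functional_extensionality; intro t. rewrite hgraph_bindH, Et, Efx. unfold gcat.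
      destruct (Rlt_dec t d); [apply Hbefore; auto|].
      unfold hbind_graph. destruct (Rlt_dec t d); [lra|]. unfold f'. rewrite Efx. reflexivity. }
    f_equal. apply traj_ext. rewrite E, tev_mk_traj by apply hgraph_segment. reflexivity.
Qed.

(* [f] is undefined somewhere on [0,d]; if only at [d], then [f x] is empty and adds nothing. *)
Lemma bindH_restrict_partial : ~ defined_upto (iotaK f) G d ->
  hgraph (bindH f (restrict (iotaK f) p)) = hgraph (restrict (iotaK f) p) /\
  hend (bindH f (restrict (iotaK f) p)) = None.
Proof.
  intro Hnf.
  destruct (hend (restrict (iotaK f) p)) as [[d1 x1]|] eqn:Et; [|apply bindH_unterminated; auto].
  pose proof Et as Et'. apply hend_restrict in Et' as [Ep Hfull]. injection Ep as <- <-.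
  simpl in Hfull.
  assert (Nx : iotaK f x = inr tt).
  { destruct (iotaK f x) as [b|[]] eqn:Nx; auto. elim Hnf. intros s Hs. unfold G.
    destruct (Rlt_dec s d).
    - destruct (Hfull s ltac:(fold d; lra) s ltac:(lra)) as [v [a [Hv Ha]]].
      exists v, a. rewrite close_graph_lt; auto.
    - replace s with d by lra. exists x, b. rewrite close_graph_eq; auto. }
  destruct (iota'_undefined (f x) Nx) as [Hfe Hfg].
  rewrite hgraph_bindH, hend_bindH, Et, Hfe. split; [|reflexivity].
  replace (hgraph (f x)) with (fun _ : R => @None Y) by (apply functional_extensionality; auto).
  apply gcat_empty_r, (hend_segment Et).
Qed.

Lemma to_HH_bindT_partial : ~ defined_upto (iotaK f) G d -> to_HH (bindT f p) = hbind f' (to_HH p).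
Proof.
  intro Hnf. destruct (bindH_restrict_partial Hnf) as [Hgr Hend].
  destruct (to_HH_inl m x) as [c [Hc [Hd Hg]]]. fold d in Hd, Hg. fold G in Hg.
  unfold p at 2. rewrite Hc, (hbind_inl _ _ Hd), Hg.
  rewrite decP_false by (rewrite hbind_live_closed; exact Hnf).
  assert (E : hbind_head f' G = hgraph (restrict (iotaK f) p)).
  { apply functional_extensionality; intro t. apply option_eq_iff; intro a.
    rewrite hbind_head_Some, hgraph_restrict. split.
    - intros [H0 [Hok [v [Hv Ha]]]].
      assert (Ht : t < d)
        by (destruct (Rlt_dec t d); auto; elim Hnf; apply (defined_upto_le Hok); lra).
      unfold G in Hv. rewrite close_graph_lt in Hv by auto.
      split; [apply (defined_upto_close_lt Ht); auto | eauto].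
    - intros [Hok [v [Hv Ha]]].
      assert (Ht : 0 <= t < d)
        by (apply (proj2 (trj_segment m)); change (hgraph p t <> None); congruence).
      split; [lra|]. split; [apply (defined_upto_close_lt (proj2 Ht)); auto|].
      exists v. unfold G. rewrite close_graph_lt by lra. auto. }
  rewrite bindT_restrict, to_HH_unterminated by exact Hend. f_equal. apply traj_ext.
  change (tev (H_traj ?q)) with (hgraph q). rewrite Hgr, E, tev_mk_traj by apply hgraph_segment.
  reflexivity.
Qed.

End Terminated.

Lemma to_HH_bindT (p : Tm X) : to_HH (bindT f p) = hbind f' (to_HH p).
Proof.
  destruct p as [[m x]|e]; [|apply to_HH_bindT_inr].
  set (G := close_graph (trj_len m) (tev (proj1_sig m)) x).
  destruct (classic (defined_upto (iotaK f) G (trj_len m))).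
  - apply to_HH_bindT_total; auto.
  - apply to_HH_bindT_partial; auto.
Qed.

End BindIso.

Theorem theorem3 :
  is_elgot_monad Tm etaT bindT iterT /\
  exists (alpha : forall X : Type, Tm X -> HH X) (beta : forall X : Type, HH X -> Tm X),
    (forall X (p : Tm X), beta X (alpha X p) = p) /\
    (forall X (q : HH X), alpha X (beta X q) = q) /\
    (forall X (x : X), alpha X (etaT x) = hret x) /\
    (forall X Y (f : X -> Tm Y) (p : Tm X),
        alpha Y (bindT f p) = hbind (fun x => alpha Y (f x)) (alpha X p)).
Proof.
  split.
  - repeat split.
    + intros X p. apply bindT_etaT_r.
    + intros X Y f x. apply bindT_etaT_l.
    + intros X Y Z f g p. apply bindT_assoc.
    + intros X Y f x. apply iterT_fix.
    + intros X Y Z f g x. apply bindT_iterT.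
    + intros X Y f x. apply iterT_codiag.
    + intros X Y Z f g h Hfg z. exact (iterT_uniform f g h Hfg z).
  - exists to_HH, of_HH. repeat split.
    + intros X p. apply of_to_HH.
    + intros X q. apply to_of_HH.
    + intros X x. apply to_HH_etaT.
    + intros X Y f p. apply to_HH_bindT.
Qed.
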